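(* Consider the linear control system $\Sigma$ on $G$ with parameters $(a,b),(\alpha,\beta)\in\mathbb{R}^2\setminus\{(0,0)\}$. Then: 1. If $\alpha=0$, then $\Sigma$ has infinitely many control sets. 2. If $\alpha\neq 0$, then $\Sigma$ has exactly one control set. This control set has nonempty interior if and only if $\Sigma$ satisfies the Lie algebra rank condition, i.e. if and only if $\alpha(a\alpha+b\beta)\neq 0$.
   Context: Let $G=\{(x,y)\in\mathbb{R}^2: x>0\}$, which is a Lie group with the product $(x_1,y_1)\cdot(x_2,y_2)=(x_1x_2,\ y_2+x_2y_1)$. Fix $\Omega=[u_*,u^*]$ with $u_*<0<u^*$. The admissible controls $\mathcal U$ are the piecewise constant functions $u:\mathbb{R}\to\Omega$. For constants $(a,b),(\alpha,\beta)\in\mathbb{R}^2\setminus\{(0,0)\}$, the linear control system $\Sigma$ on $G$ is $\dot x=u\alpha x,\quad \dot y=a(x-1)+by+u x\beta,\quad u\in\mathcal U.$ We write $\varphi(t,p,u)$ for the solution with $\varphi(0,p,u)=p$, and $\mathcal O^+(p)=\{\varphi(t,p,u): t\ge 0,\ u\in\mathcal U\}$ for the positive orbit of $p$. A control set is a subset $\mathcal C\subset G$ that is maximal with respect to inclusion among the sets satisfying both of the following: (i) for every $p\in\mathcal C$ there is $u\in\mathcal U$ with $\varphi(t,p,u)\in\mathcal C$ for all $t\ge 0$; (ii) $\mathcal C\subset\operatorname{cl}\mathcal O^+(p)$ for every $p\in\mathcal C$, where the closure is taken in $G$. The Lie algebra rank condition (LARC) holds if the Lie algebra of vector fields generated by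 $f_u(x,y)=(u\alpha x,\ a(x-1)+by+ux\beta)$, $u\in\Omega$, spans $\mathbb{R}^2$ at every point of $G$. *)

From Stdlib Require Import Reals List.
Open Scope R_scope.

Definition inG (p : R * R) : Prop := 0 < fst p.

Definition field (a b al be u : R) (p : R * R) : R * R :=
  (u * al * fst p, a * (fst p - 1) + b * snd p + u * fst p * be).

(* Piecewise constant: on every compact interval [t0,t1] there are finitely
   many points (a list l) off which u is constant on each connected piece. *)
Definition piecewise_constant (u : R -> R) : Prop :=
  forall t0 t1 : R, exists l : list R,
    forall s1 s2 : R, t0 <= s1 -> s1 <= s2 -> s2 <= t1 ->
      (forall c, In c l -> c < s1 \/ s2 < c) -> u s1 = u s2.

Definition admissible (us uS : R) (u : R -> R) : Prop :=
  piecewise_constant u /\ (forall t, us <= u t <= uS).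

(* gam is the solution phi(.,p,u): continuous, gam 0 = p, and satisfying the
   ODE at every time t where u is locally constant (for piecewise constant u
   the remaining times form a locally finite set). *)
Definition is_solution (a b al be : R) (u : R -> R) (p : R * R)
    (gam : R -> R * R) : Prop :=
  gam 0 = p /\
  (forall t, continuity_pt (fun s => fst (gam s)) t /\
             continuity_pt (fun s => snd (gam s)) t) /\
  (forall t, (exists d, 0 < d /\ forall s, Rabs (s - t) < d -> u s = u t) ->
     derivable_pt_lim (fun s => fst (gam s)) t (fst (field a b al be (u t) (gam t))) /\
     derivable_pt_lim (fun s => snd (gam s)) t (snd (field a b al be (u t) (gam t)))).

Definition pos_orbit (a b al be us uS : R) (p q : R * R) : Prop :=
  exists u gam t, admissible us uS u /\ is_solution a b al be u p gam /\
    0 <= t /\ gam t = q.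

(* Closure (in R^2; for points of G this is the closure in G). *)
Definition in_closure (S : R * R -> Prop) (q : R * R) : Prop :=
  forall eps, 0 < eps -> exists s, S s /\
    Rabs (fst s - fst q) < eps /\ Rabs (snd s - snd q) < eps.

Definition cs_props (a b al be us uS : R) (C : R * R -> Prop) : Prop :=
  (forall p, C p -> inG p) /\
  (forall p, C p -> exists u gam, admissible us uS u /\
      is_solution a b al be u p gam /\ forall t, 0 <= t -> C (gam t)) /\
  (forall p, C p -> forall q, C q -> in_closure (pos_orbit a b al be us uS p) q).

Definition control_set (a b al be us uS : R) (C : R * R -> Prop) : Prop :=
  cs_props a b al be us uS C /\
  forall D, cs_props a b al be us uS D -> (forall p, C p -> D p) ->
    forall p, D p <-> C p.

Definition nonempty_interior (C : R * R -> Prop) : Prop :=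
  exists p eps, 0 < eps /\ forall q,
    Rabs (fst q - fst p) < eps -> Rabs (snd q - snd p) < eps -> C q.

Definition ddir (Y : R * R -> R * R) (p v w : R * R) : Prop :=
  derivable_pt_lim (fun s => fst (Y (fst p + s * fst v, snd p + s * snd v))) 0 (fst w) /\
  derivable_pt_lim (fun s => snd (Y (fst p + s * fst v, snd p + s * snd v))) 0 (snd w).

(* The Lie algebra of vector fields on G generated by f_u, u in Omega:
   smallest set containing the f_u and closed under linear combinations
   and Lie brackets [X,Y](p) = DY(p)X(p) - DX(p)Y(p) (values on G). *)
Inductive lie_gen (a b al be us uS : R) : (R * R -> R * R) -> Prop :=
| lg_gen : forall u Z, us <= u <= uS ->
    (forall p, inG p -> Z p = field a b al be u p) -> lie_gen a b al be us uS Z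
| lg_lin : forall X Y Z c d, lie_gen a b al be us uS X -> lie_gen a b al be us uS Y ->
    (forall p, inG p -> Z p = (c * fst (X p) + d * fst (Y p),
                               c * snd (X p) + d * snd (Y p))) ->
    lie_gen a b al be us uS Z
| lg_br : forall X Y Z, lie_gen a b al be us uS X -> lie_gen a b al be us uS Y ->
    (forall p, inG p -> exists dY dX, ddir Y p (X p) dY /\ ddir X p (Y p) dX /\
        Z p = (fst dY - fst dX, snd dY - snd dX)) ->
    lie_gen a b al be us uS Z.

Definition LARC (a b al be us uS : R) : Prop :=
  forall p, inG p -> exists X Y, lie_gen a b al be us uS X /\ lie_gen a b al be us uS Y /\
    fst (X p) * snd (Y p) - snd (X p) * fst (Y p) <> 0.

From Stdlib Require Import Reals List Lra Lia Psatz Classical.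
From Coquelicot Require Derive.
Open Scope R_scope.

(* Along [f_u] one has [x' = u al x].  For [al = 0] every line [x = x0] is invariant and
   carries the scalar affine system [y' = a (x0 - 1) + b y + u be x0], whose control set
   (an equilibrium, a band of equilibria, or the whole line) is a control set of the plane;
   this gives one control set for each of infinitely many lines.  For [al <> 0] use [x] and
   [m = al y - be x].  If [a al + b be = 0], then [b m - a al] is multiplied by [exp (b t)]
   along every [f_u]: the control set is the line [b m = a al], and every Lie bracket is
   tangent to it.  If [b = 0] everything is reachable.  Otherwise [V = r / x], with
   [r = (a al - b m) / (a al + b be)], solves [V' = (b - u al) V - b], and the control set
   consists of the points whose [V] is an equilibrium for an admissible rate [u al].
   Maximality always comes from comparison: an affine function whose derivative along
   every [f_u] is bounded by a multiple of itself can be crossed in one direction only. *)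

(** * Derivatives and monotonicity *)

(* Pointwise forms of the Stdlib rules, which are stated for [fct_cte], [id], [plus_fct], ... *)
Lemma dlim_scal c f t l : derivable_pt_lim f t l -> derivable_pt_lim (fun s => c * f s) t (c * l).
Proof. exact (derivable_pt_lim_scal f c t l). Qed.

Lemma dlim_plus f g t l1 l2 : derivable_pt_lim f t l1 -> derivable_pt_lim g t l2 ->
  derivable_pt_lim (fun s => f s + g s) t (l1 + l2).
Proof. exact (derivable_pt_lim_plus f g t l1 l2). Qed.

Lemma dlim_minus f g t l1 l2 : derivable_pt_lim f t l1 -> derivable_pt_lim g t l2 ->
  derivable_pt_lim (fun s => f s - g s) t (l1 - l2).
Proof. exact (derivable_pt_lim_minus f g t l1 l2). Qed.

Lemma dlim_mult f g t l1 l2 : derivable_pt_lim f t l1 -> derivable_pt_lim g t l2 ->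
  derivable_pt_lim (fun s => f s * g s) t (l1 * g t + f t * l2).
Proof. exact (derivable_pt_lim_mult f g t l1 l2). Qed.

Lemma dlim_const c t : derivable_pt_lim (fun _ => c) t 0.
Proof. exact (derivable_pt_lim_const c t). Qed.

Lemma dlim_id t : derivable_pt_lim (fun s => s) t 1.
Proof. exact (derivable_pt_lim_id t). Qed.

Lemma dlim_eq f l1 l2 t : l1 = l2 -> derivable_pt_lim f t l1 -> derivable_pt_lim f t l2.
Proof. intros ->; auto. Qed.

Lemma dlim_affine c0 c1 t : derivable_pt_lim (fun s => c0 + s * c1) t c1.
Proof.
  apply (dlim_eq _ (0 + (1 * c1 + t * 0))); [ring|].
  apply dlim_plus; [apply dlim_const|]. apply (dlim_mult (fun s => s) (fun _ => c1)).
  - apply dlim_id.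
  - apply dlim_const.
Qed.

Lemma dlim_exp_scal c t : derivable_pt_lim (fun s => exp (c * s)) t (c * exp (c * t)).
Proof.
  replace (c * exp (c * t)) with (exp (c * t) * c) by ring.
  apply (derivable_pt_lim_comp (fun s => c * s) exp t c).
  - apply (dlim_eq _ (c * 1)); [ring|]. apply dlim_scal, dlim_id.
  - apply derivable_pt_lim_exp.
Qed.

Lemma continuity_pt_exp_scal c t : continuity_pt (fun s => exp (c * s)) t.
Proof. apply derivable_continuous_pt. eexists. apply dlim_exp_scal. Qed.

Lemma dlim_locally_ext (f g : R -> R) t l d : 0 < d ->
  (forall s, Rabs (s - t) < d -> f s = g s) ->
  derivable_pt_lim f t l -> derivable_pt_lim g t l.
Proof.
  intros Hd E H eps Heps.
  destruct (H eps Heps) as [del Hdel].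
  assert (Hm : 0 < Rmin del d) by (apply Rmin_pos; [apply cond_pos | lra]).
  exists (mkposreal _ Hm). intros h hnz hlt. simpl in hlt.
  rewrite <- (E (t + h)), <- (E t).
  - apply Hdel; auto. apply Rlt_le_trans with (1 := hlt), Rmin_l.
  - rewrite Rminus_diag, Rabs_R0; lra.
  - replace (t + h - t) with h by ring.
    apply Rlt_le_trans with (1 := hlt), Rmin_r.
Qed.

Lemma dlim_glue (f g1 g2 : R -> R) T l :
  (forall s, s <= T -> f s = g1 s) -> (forall s, T <= s -> f s = g2 s) ->
  derivable_pt_lim g1 T l -> derivable_pt_lim g2 T l -> derivable_pt_lim f T l.
Proof.
  intros E1 E2 H1 H2 eps Heps.
  destruct (H1 eps Heps) as [d1 Hd1]. destruct (H2 eps Heps) as [d2 Hd2].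
  assert (Hm : 0 < Rmin d1 d2) by (apply Rmin_pos; apply cond_pos).
  exists (mkposreal _ Hm). intros h hnz hlt. simpl in hlt.
  destruct (Rle_dec h 0).
  - rewrite (E1 (T + h)), (E1 T) by lra. apply Hd1; auto.
    apply Rlt_le_trans with (1 := hlt), Rmin_l.
  - rewrite (E2 (T + h)), (E2 T) by lra. apply Hd2; auto.
    apply Rlt_le_trans with (1 := hlt), Rmin_r.
Qed.

Lemma dlim_shift (g : R -> R) T t l :
  derivable_pt_lim g (t - T) l -> derivable_pt_lim (fun s => g (s - T)) t l.
Proof.
  intros H eps Heps. destruct (H eps Heps) as [d Hd]. exists d.
  intros h hnz hlt. replace (t + h - T) with (t - T + h) by ring. apply Hd; auto.
Qed.

Lemma dlim_locally_zero (f : R -> R) l d : 0 < d ->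
  (forall s, Rabs s < d -> f s = 0) -> derivable_pt_lim f 0 l -> l = 0.
Proof.
  intros Hd E H.
  destruct (Req_dec l 0) as [|Hl]; auto. exfalso.
  assert (He : 0 < Rabs l) by (apply Rabs_pos_lt; auto).
  destruct (H _ He) as [del Hdel]. pose proof (cond_pos del).
  set (h := Rmin (del / 2) (d / 2)).
  assert (Hh : 0 < h) by (apply Rmin_pos; lra).
  assert (Hh1 : h <= del / 2) by apply Rmin_l. assert (Hh2 : h <= d / 2) by apply Rmin_r.
  specialize (Hdel h ltac:(lra)). rewrite Rabs_pos_eq in Hdel by lra.
  rewrite (E (0 + h)), (E 0) in Hdel.
  - replace ((0 - 0) / h - l) with (- l) in Hdel by (field; lra).
    rewrite Rabs_Ropp in Hdel. lra.
  - rewrite Rabs_R0; lra.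
  - rewrite Rplus_0_l, Rabs_pos_eq; lra.
Qed.

Lemma continuity_pt_id_shift_abs (c e : R) T t :
  continuity_pt (fun s => (s + T + e * Rabs (s - T)) / c) t.
Proof.
  apply continuity_pt_mult; [|apply continuity_pt_const; intros ? ?; auto].
  apply continuity_pt_plus.
  - apply continuity_pt_plus; [apply derivable_continuous_pt, derivable_pt_id|].
    apply continuity_pt_const; intros ? ?; auto.
  - apply (continuity_pt_scal (fun s => Rabs (s - T))).
    apply (continuity_pt_comp (fun s => s - T) Rabs); [|apply Rcontinuity_abs].
    apply continuity_pt_minus; [apply derivable_continuous_pt, derivable_pt_id|].
    apply continuity_pt_const; intros ? ?; auto.
Qed.

Lemma continuity_pt_Rmin_r T t : continuity_pt (fun s => Rmin s T) t.
Proof.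
  apply continuity_pt_locally_ext with (a := 1) (f := fun s => (s + T + (-1) * Rabs (s - T)) / 2);
    [lra| |apply continuity_pt_id_shift_abs].
  intros y _. unfold Rmin. destruct (Rle_dec y T).
  - rewrite Rabs_left1 by lra. field.
  - rewrite Rabs_pos_eq by lra. field.
Qed.

Lemma continuity_pt_Rmax_r T t : continuity_pt (fun s => Rmax s T) t.
Proof.
  apply continuity_pt_locally_ext with (a := 1) (f := fun s => (s + T + 1 * Rabs (s - T)) / 2);
    [lra| |apply continuity_pt_id_shift_abs].
  intros y _. unfold Rmax. destruct (Rle_dec y T).
  - rewrite Rabs_left1 by lra. field.
  - rewrite Rabs_pos_eq by lra. field.
Qed.

Lemma continuity_pt_glue (g1 g2 : R -> R) T :
  (forall t, continuity_pt g1 t) -> (forall t, continuity_pt g2 t) -> g1 T = g2 T ->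
  forall t, continuity_pt (fun s => if Rle_dec s T then g1 s else g2 s) t.
Proof.
  intros C1 C2 E t.
  (* the glued function equals [g1 (min s T) + g2 (max s T) - g1 T] *)
  apply continuity_pt_locally_ext with (a := 1)
    (f := fun s => g1 (Rmin s T) + g2 (Rmax s T) - g1 T); [lra| |].
  { intros s _. unfold Rmin, Rmax. destruct (Rle_dec s T); lra. }
  apply continuity_pt_minus; [apply continuity_pt_plus|apply continuity_pt_const; intros ? ?; auto].
  - apply (continuity_pt_comp (fun s => Rmin s T) g1); auto using continuity_pt_Rmin_r.
  - apply (continuity_pt_comp (fun s => Rmax s T) g2); auto using continuity_pt_Rmax_r.
Qed.

Definition locally_const (u : R -> R) (t : R) : Prop :=
  exists d, 0 < d /\ forall s, Rabs (s - t) < d -> u s = u t.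

Lemma le_of_derivative_nonneg (u h : R -> R) a b :
  a <= b -> (forall t, a <= t <= b -> continuity_pt h t) ->
  (forall t, a < t < b -> locally_const u t -> exists l, derivable_pt_lim h t l /\ 0 <= l) ->
  (forall t, a < t < b -> locally_const u t) ->
  h a <= h b.
Proof.
  intros Hab Hc Hd Hu.
  set (df := fun t => Rmax 0 (Derive.Derive h t)).
  destruct (Derive.MVT_gen h a b df) as [c [Hc1 Hc2]].
  - intros x Hx. rewrite Rmin_left, Rmax_right in Hx by lra.
    destruct (Hd x Hx (Hu x Hx)) as [l [Hl Hl0]].
    apply Derive.is_derive_Reals in Hl.
    unfold df. rewrite (Derive.is_derive_unique _ _ _ Hl), Rmax_right by lra. auto.
  - intros x Hx. rewrite Rmin_left, Rmax_right in Hx by lra. auto.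
  - assert (0 <= df c) by (unfold df; apply Rmax_l).
    assert (0 <= df c * (b - a)) by (apply Rmult_le_pos; lra). lra.
Qed.

Definition in_open_interval (a b c : R) : bool :=
  if Rlt_dec a c then (if Rlt_dec c b then true else false) else false.

Lemma in_open_intervalP a b c : in_open_interval a b c = true <-> a < c < b.
Proof.
  unfold in_open_interval.
  destruct (Rlt_dec a c); destruct (Rlt_dec c b); split; intros H; try discriminate; auto; lra.
Qed.

Lemma filter_length_le (P Q : R -> bool) (L : list R) :
  (forall x, P x = true -> Q x = true) -> (length (filter P L) <= length (filter Q L))%nat.
Proof.
  intros HPQ. induction L as [|y L IH]; simpl; auto.
  destruct (P y) eqn:E; [rewrite (HPQ y E); simpl; lia|]. destruct (Q y); simpl; lia.
Qed.

Lemma filter_length_lt (P Q : R -> bool) (L : list R) c :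
  (forall x, P x = true -> Q x = true) -> In c L -> P c = false -> Q c = true ->
  (length (filter P L) < length (filter Q L))%nat.
Proof.
  intros HPQ. induction L as [|x L IH]; simpl; [tauto|].
  intros [->|Hin] Hp Hq.
  - rewrite Hp, Hq. simpl. pose proof (filter_length_le P Q L HPQ). lia.
  - specialize (IH Hin Hp Hq). destruct (P x) eqn:E.
    + rewrite (HPQ x E). simpl; lia.
    + destruct (Q x); simpl; lia.
Qed.

Lemma locally_const_between u t0 t1 L a b :
  (forall s1 s2, t0 <= s1 -> s1 <= s2 -> s2 <= t1 ->
     (forall c, In c L -> c < s1 \/ s2 < c) -> u s1 = u s2) ->
  t0 <= a -> b <= t1 -> filter (in_open_interval a b) L = nil ->
  forall t, a < t < b -> locally_const u t.
Proof.
  intros HL Ha Hb Hnil t Ht.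
  assert (Hout : forall c, In c L -> c <= a \/ b <= c).
  { intros c Hc. destruct (Rle_dec c a); auto. destruct (Rle_dec b c); auto. exfalso.
    assert (Hf : In c (filter (in_open_interval a b) L))
      by (apply filter_In; split; auto; apply in_open_intervalP; lra).
    rewrite Hnil in Hf. destruct Hf. }
  exists (Rmin (t - a) (b - t)). split; [apply Rmin_pos; lra|].
  intros s Hs.
  assert (H1 : Rabs (s - t) < t - a) by (eapply Rlt_le_trans; [apply Hs|apply Rmin_l]).
  assert (H2 : Rabs (s - t) < b - t) by (eapply Rlt_le_trans; [apply Hs|apply Rmin_r]).
  apply Rabs_def2 in H1. apply Rabs_def2 in H2.
  destruct (Rle_dec s t); [|symmetry]; apply HL; try lra;
    intros c Hcin; destruct (Hout c Hcin); lra.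
Qed.

(* Induction on the number of breakpoints of [u] inside [a, b]. *)
Lemma le_of_derivative_nonneg_pwc (u h : R -> R) t0 t1 :
  piecewise_constant u -> t0 <= t1 -> (forall t, t0 <= t <= t1 -> continuity_pt h t) ->
  (forall t, t0 < t < t1 -> locally_const u t -> exists l, derivable_pt_lim h t l /\ 0 <= l) ->
  h t0 <= h t1.
Proof.
  intros Hpc H01 Hc Hd. destruct (Hpc t0 t1) as [L HL].
  assert (Main : forall n a b, t0 <= a -> a <= b -> b <= t1 ->
     (length (filter (in_open_interval a b) L) <= n)%nat -> h a <= h b).
  { induction n as [|n IH]; intros a b Ha Hab Hb Hn.
    - apply (le_of_derivative_nonneg u h a b Hab).
      + intros; apply Hc; lra.
      + intros; apply Hd; auto; lra.
      + apply (locally_const_between u t0 t1 L); auto.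
        destruct (filter (in_open_interval a b) L); [auto|simpl in Hn; lia].
    - destruct (classic (exists c, In c L /\ a < c < b)) as [[c [Hcin Hcab]]|Hno].
      + assert (Hcnt : forall a' b', a <= a' -> b' <= b -> (a' = c \/ b' = c) ->
          (length (filter (in_open_interval a' b') L) < length (filter (in_open_interval a b) L))%nat).
        { intros a' b' Ha' Hb' Hc'. apply filter_length_lt with c; auto.
          - intros x Hx. apply in_open_intervalP in Hx. apply in_open_intervalP. lra.
          - destruct (in_open_interval a' b' c) eqn:E; auto.
            apply in_open_intervalP in E. lra.
          - apply in_open_intervalP. lra. }
        apply Rle_trans with (h c).
        * apply IH; try lra. pose proof (Hcnt a c ltac:(lra) ltac:(lra) ltac:(auto)). lia.
        * apply IH; try lra. pose proof (Hcnt c b ltac:(lra) ltac:(lra) ltac:(auto)). lia.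
      + apply IH; auto.
        replace (filter (in_open_interval a b) L) with (@nil R); [simpl; lia|].
        symmetry. destruct (filter (in_open_interval a b) L) as [|c l0] eqn:E; auto. exfalso.
        assert (Hc0 : In c (filter (in_open_interval a b) L)) by (rewrite E; left; auto).
        apply filter_In in Hc0 as [Hin Hi]. apply in_open_intervalP in Hi.
        apply Hno. exists c. auto. }
  apply (Main (length (filter (in_open_interval t0 t1) L))); lra || lia.
Qed.

(** * Constant controls and their concatenations *)

(* [int_exp mu t] is the integral of [exp (mu s)] over [0, t]. *)
Definition int_exp (mu t : R) : R := if Req_EM_T mu 0 then t else (exp (mu * t) - 1) / mu.

Lemma dlim_int_exp mu t : derivable_pt_lim (int_exp mu) t (exp (mu * t)).
Proof.
  unfold int_exp. destruct (Req_EM_T mu 0) as [->|Hm].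
  - rewrite Rmult_0_l, exp_0. apply dlim_id.
  - eapply dlim_eq.
    2: { apply (dlim_mult (fun s => exp (mu * s) - 1) (fun _ => / mu)).
         - apply dlim_minus; [apply dlim_exp_scal|apply dlim_const].
         - apply dlim_const. }
    field; auto.
Qed.

Lemma mul_int_exp mu t : mu * int_exp mu t = exp (mu * t) - 1.
Proof.
  unfold int_exp. destruct (Req_EM_T mu 0) as [->|Hm].
  - rewrite !Rmult_0_l, exp_0; ring.
  - field; auto.
Qed.

Lemma int_exp_t0 mu : int_exp mu 0 = 0.
Proof. unfold int_exp. destruct (Req_EM_T mu 0); auto. rewrite Rmult_0_r, exp_0. field; auto. Qed.

Lemma int_exp_mu0 t : int_exp 0 t = t.
Proof. unfold int_exp. destruct (Req_EM_T 0 0); auto. lra. Qed.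

Lemma exp_mul_int_exp_opp b t : b * (exp (b * t) * int_exp (- b) t) = exp (b * t) - 1.
Proof.
  pose proof (mul_int_exp (- b) t) as H.
  assert (E : exp (b * t) * exp (- b * t) = 1)
    by (rewrite <- exp_plus; replace (b * t + - b * t) with 0 by ring; apply exp_0).
  replace (b * (exp (b * t) * int_exp (- b) t)) with (- (exp (b * t) * (- b * int_exp (- b) t))) by ring.
  rewrite H.
  replace (exp (b * t) * (exp (- b * t) - 1)) with (exp (b * t) * exp (- b * t) - exp (b * t)) by ring.
  rewrite E. ring.
Qed.

(* Variation of constants for the linear ODE [y' = a (x - 1) + b y + v x be] with
   [x = x0 exp (v al t)]. *)
Definition flow (a b al be v : R) (p : R * R) (t : R) : R * R :=
  (fst p * exp (v * al * t),
   exp (b * t) * (snd p + (a + v * be) * fst p * int_exp (v * al - b) t - a * int_exp (- b) t)).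

Lemma flow_x a b al be v p t : fst (flow a b al be v p t) = fst p * exp (v * al * t).
Proof. reflexivity. Qed.

Lemma flow_t0 a b al be v p : flow a b al be v p 0 = p.
Proof. destruct p. unfold flow; simpl. rewrite !Rmult_0_r, exp_0, !int_exp_t0. f_equal; ring. Qed.

Lemma flow_derive_x a b al be v p t :
  derivable_pt_lim (fun s => fst (flow a b al be v p s)) t
    (fst (field a b al be v (flow a b al be v p t))).
Proof.
  unfold flow, field; simpl.
  apply (dlim_eq _ (fst p * (v * al * exp (v * al * t)))); [ring|].
  apply dlim_scal, dlim_exp_scal.
Qed.

Lemma flow_derive_y a b al be v p t :
  derivable_pt_lim (fun s => snd (flow a b al be v p s)) t
    (snd (field a b al be v (flow a b al be v p t))).
Proof.
  unfold flow, field; simpl.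
  set (A := fun s => snd p + (a + v * be) * fst p * int_exp (v * al - b) s - a * int_exp (- b) s).
  assert (HA : derivable_pt_lim A t
                 ((a + v * be) * fst p * exp ((v * al - b) * t) - a * exp (- b * t))).
  { unfold A. apply dlim_minus; [|apply dlim_scal, dlim_int_exp].
    apply (dlim_eq _ (0 + (a + v * be) * fst p * exp ((v * al - b) * t))); [ring|].
    apply dlim_plus; [apply dlim_const|apply dlim_scal, dlim_int_exp]. }
  eapply dlim_eq; [|exact (dlim_mult (fun s => exp (b * s)) A t _ _ (dlim_exp_scal b t) HA)].
  unfold A.
  replace ((v * al - b) * t) with (v * al * t + - (b * t)) by ring.
  replace (- b * t) with (- (b * t)) by ring.
  rewrite exp_plus, exp_Ropp.
  pose proof (exp_pos (b * t)). field. lra.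
Qed.

Lemma admissible_const us uS v : us <= v <= uS -> admissible us uS (fun _ => v).
Proof. intros H. split; auto. intros t0 t1. exists nil. auto. Qed.

Lemma flow_is_solution a b al be v p :
  is_solution a b al be (fun _ => v) p (flow a b al be v p).
Proof.
  split; [apply flow_t0|]. split.
  - intro t. split; apply derivable_continuous_pt; eexists; [apply flow_derive_x|apply flow_derive_y].
  - intros t _. split; [apply flow_derive_x|apply flow_derive_y].
Qed.

Lemma pos_orbit_flow a b al be us uS v p t : us <= v <= uS -> 0 <= t ->
  pos_orbit a b al be us uS p (flow a b al be v p t).
Proof.
  intros Hv Ht. exists (fun _ => v), (flow a b al be v p), t.
  split; [apply admissible_const; auto|]. split; [apply flow_is_solution|]. auto.
Qed.

Lemma pos_orbit_refl a b al be us uS p : us <= 0 <= uS -> pos_orbit a b al be us uS p p.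
Proof. intros H. rewrite <- (flow_t0 a b al be 0 p) at 2. apply pos_orbit_flow; lra. Qed.

Lemma in_closure_pos_orbit a b al be us uS p q :
  pos_orbit a b al be us uS p q -> in_closure (pos_orbit a b al be us uS p) q.
Proof. intros H eps He. exists q. split; auto. rewrite !Rminus_diag, Rabs_R0. lra. Qed.

Definition prepend_control (v tau : R) (u : R -> R) (t : R) : R :=
  if Rlt_dec t tau then v else u (t - tau).

Definition prepend_traj (a b al be v tau : R) (p : R * R) (g : R -> R * R) (t : R) : R * R :=
  if Rle_dec t tau then flow a b al be v p t else g (t - tau).

Lemma prepend_control_pwc v tau u : 0 < tau -> piecewise_constant u ->
  piecewise_constant (prepend_control v tau u).
Proof.
  intros Htau Hpc t0 t1. destruct (Hpc (t0 - tau) (t1 - tau)) as [l' Hl'].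
  exists (tau :: map (fun c => c + tau) l'). intros s1 s2 H1 H12 H2 Hc.
  unfold prepend_control.
  destruct (Hc tau (or_introl eq_refl)) as [Hs|Hs].
  - destruct (Rlt_dec s1 tau); [lra|]. destruct (Rlt_dec s2 tau); [lra|].
    apply Hl'; try lra. intros c Hcin.
    destruct (Hc (c + tau)) as [Hq|Hq]; [right; apply (in_map (fun c0 => c0 + tau)); auto|lra|lra].
  - destruct (Rlt_dec s1 tau); [|lra]. destruct (Rlt_dec s2 tau); [auto|lra].
Qed.

Lemma continuity_pt_glue_shift (f g : R -> R) tau :
  (forall t, continuity_pt f t) -> (forall t, continuity_pt g t) -> g 0 = f tau ->
  forall t, continuity_pt (fun s => if Rle_dec s tau then f s else g (s - tau)) t.
Proof.
  intros Cf Cg E. apply continuity_pt_glue; auto; [|rewrite Rminus_diag; auto].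
  intro t. apply (continuity_pt_comp (fun s => s - tau)); auto.
  apply continuity_pt_minus; [apply derivable_continuous_pt, derivable_pt_id|].
  apply continuity_pt_const; intros ? ?; auto.
Qed.

Lemma prepend_traj_continuous a b al be v tau p g :
  g 0 = flow a b al be v p tau ->
  (forall t, continuity_pt (fun s => fst (g s)) t /\ continuity_pt (fun s => snd (g s)) t) ->
  forall t, continuity_pt (fun s => fst (prepend_traj a b al be v tau p g s)) t /\
            continuity_pt (fun s => snd (prepend_traj a b al be v tau p g s)) t.
Proof.
  intros Hg0 Hcont t. unfold prepend_traj. split.
  - apply continuity_pt_locally_ext with (a := 1)
      (f := fun s => if Rle_dec s tau then fst (flow a b al be v p s) else fst (g (s - tau))).
    + lra.
    + intros y _. destruct (Rle_dec y tau); auto.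
    + apply (continuity_pt_glue_shift (fun s => fst (flow a b al be v p s)) (fun s => fst (g s))).
      * intro t'. apply derivable_continuous_pt; eexists; apply flow_derive_x.
      * apply Hcont.
      * rewrite Hg0; auto.
  - apply continuity_pt_locally_ext with (a := 1)
      (f := fun s => if Rle_dec s tau then snd (flow a b al be v p s) else snd (g (s - tau))).
    + lra.
    + intros y _. destruct (Rle_dec y tau); auto.
    + apply (continuity_pt_glue_shift (fun s => snd (flow a b al be v p s)) (fun s => snd (g s))).
      * intro t'. apply derivable_continuous_pt; eexists; apply flow_derive_y.
      * apply Hcont.
      * rewrite Hg0; auto.
Qed.

Lemma prepend_control_lt v tau u s : s < tau -> prepend_control v tau u s = v.
Proof. intros Hs; unfold prepend_control; destruct (Rlt_dec s tau); [auto|lra]. Qed.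

Lemma prepend_control_ge v tau u s : tau <= s -> prepend_control v tau u s = u (s - tau).
Proof. intros Hs; unfold prepend_control; destruct (Rlt_dec s tau); [lra|auto]. Qed.

Lemma prepend_traj_le a b al be v tau p g s : s <= tau ->
  prepend_traj a b al be v tau p g s = flow a b al be v p s.
Proof. intros Hs; unfold prepend_traj; destruct (Rle_dec s tau); [auto|lra]. Qed.

Lemma prepend_traj_ge a b al be v tau p g s : g 0 = flow a b al be v p tau -> tau <= s ->
  prepend_traj a b al be v tau p g s = g (s - tau).
Proof.
  intros Hg0 Hs; unfold prepend_traj; destruct (Rle_dec s tau); [|auto].
  replace s with tau by lra. rewrite Rminus_diag, Hg0. auto.
Qed.

Lemma prepend_control_junction v tau u : locally_const (prepend_control v tau u) tau -> u 0 = v.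
Proof.
  intros [d [Hd Hloc]].
  assert (Hd2 : Rabs ((tau - d / 2) - tau) < d) by (rewrite Rabs_left; lra).
  pose proof (Hloc _ Hd2) as E.
  rewrite prepend_control_lt, prepend_control_ge, Rminus_diag in E by lra. auto.
Qed.

Lemma prepend_control_after v tau u t : tau < t ->
  locally_const (prepend_control v tau u) t -> locally_const u (t - tau).
Proof.
  intros Ht [d [Hd Hloc]]. exists (Rmin d (t - tau)); split; [apply Rmin_pos; lra|].
  intros s Hs.
  assert (Hs1 : Rabs (s - (t - tau)) < d) by (eapply Rlt_le_trans; [apply Hs|apply Rmin_l]).
  assert (Hs2 : Rabs (s - (t - tau)) < t - tau) by (eapply Rlt_le_trans; [apply Hs|apply Rmin_r]).
  apply Rabs_def2 in Hs2.
  assert (Hs3 : Rabs ((s + tau) - t) < d) by (replace (s + tau - t) with (s - (t - tau)) by ring; auto).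
  pose proof (Hloc _ Hs3) as E. rewrite !prepend_control_ge in E by lra.
  replace (s + tau - tau) with s in E by ring. auto.
Qed.

Lemma prepend_traj_derive a b al be v tau p u g t : 0 < tau ->
  (exists e, 0 < e /\ forall s, s < e -> u s = u 0) ->
  g 0 = flow a b al be v p tau ->
  (forall t, locally_const u t ->
     derivable_pt_lim (fun s => fst (g s)) t (fst (field a b al be (u t) (g t))) /\
     derivable_pt_lim (fun s => snd (g s)) t (snd (field a b al be (u t) (g t)))) ->
  locally_const (prepend_control v tau u) t ->
  let G := prepend_traj a b al be v tau p g in
  let w := prepend_control v tau u t in
  derivable_pt_lim (fun s => fst (G s)) t (fst (field a b al be w (G t))) /\
  derivable_pt_lim (fun s => snd (G s)) t (snd (field a b al be w (G t))).
Proof.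
  intros Htau Hinit Hg0 Hder Hloc G w.
  assert (GL : forall s, s <= tau -> G s = flow a b al be v p s) by (intros; apply prepend_traj_le; auto).
  assert (GR : forall s, tau <= s -> G s = g (s - tau)) by (intros; apply prepend_traj_ge; auto).
  unfold w. destruct (Rtotal_order t tau) as [Hlt|[Heq|Hgt]].
  - rewrite prepend_control_lt, GL by lra.
    split; eapply dlim_locally_ext with (d := tau - t); try lra;
      [ | apply flow_derive_x | | apply flow_derive_y];
      intros s Hs; rewrite GL; auto; apply Rabs_def2 in Hs; lra.
  - subst t.
    (* the control is constant across the junction, so both one-sided derivatives agree *)
    pose proof (prepend_control_junction v tau u Hloc) as Huv.
    destruct Hinit as [e [He He']].
    destruct (Hder 0) as [Dx Dy].
    { exists e; split; auto. intros s Hs. apply He'. apply Rabs_def2 in Hs; lra. }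
    rewrite prepend_control_ge, Rminus_diag, Huv by lra. rewrite Huv, Hg0 in Dx, Dy. rewrite GL by lra.
    split.
    + apply (dlim_glue _ (fun s => fst (flow a b al be v p s)) (fun s => fst (g (s - tau)))).
      * intros s Hs; rewrite GL; auto.
      * intros s Hs; rewrite GR; auto.
      * apply flow_derive_x.
      * apply (dlim_shift (fun s => fst (g s))). rewrite Rminus_diag; auto.
    + apply (dlim_glue _ (fun s => snd (flow a b al be v p s)) (fun s => snd (g (s - tau)))).
      * intros s Hs; rewrite GL; auto.
      * intros s Hs; rewrite GR; auto.
      * apply flow_derive_y.
      * apply (dlim_shift (fun s => snd (g s))). rewrite Rminus_diag; auto.
  - rewrite prepend_control_ge, GR by lra.
    destruct (Hder (t - tau) (prepend_control_after v tau u t Hgt Hloc)) as [Dx Dy].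
    split; eapply dlim_locally_ext with (d := t - tau); try lra;
      [ | apply (dlim_shift (fun s => fst (g s))); apply Dx
        | | apply (dlim_shift (fun s => snd (g s))); apply Dy];
      intros s Hs; apply Rabs_def2 in Hs; rewrite GR; auto; lra.
Qed.

Lemma prepend_is_solution a b al be v tau p u g : 0 < tau ->
  (exists e, 0 < e /\ forall s, s < e -> u s = u 0) ->
  is_solution a b al be u (flow a b al be v p tau) g ->
  is_solution a b al be (prepend_control v tau u) p (prepend_traj a b al be v tau p g).
Proof.
  intros Htau Hinit [Hg0 [Hcont Hder]]. split; [|split].
  - unfold prepend_traj. destruct (Rle_dec 0 tau); [apply flow_t0|lra].
  - apply prepend_traj_continuous; auto.
  - intros t Hloc. apply (prepend_traj_derive a b al be v tau p u g t); auto.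
Qed.

(* A control is a list of (value, duration) pairs; pairs of duration [<= 0] are skipped,
   and after the last one the control is [0]. *)
Fixpoint concat_control (l : list (R * R)) : R -> R :=
  match l with
  | nil => fun _ => 0
  | (v, tau) :: r =>
      if Rlt_dec 0 tau then prepend_control v tau (concat_control r) else concat_control r
  end.

Fixpoint concat_traj (a b al be : R) (l : list (R * R)) (p : R * R) : R -> R * R :=
  match l with
  | nil => flow a b al be 0 p
  | (v, tau) :: r =>
      if Rlt_dec 0 tau
      then prepend_traj a b al be v tau p (concat_traj a b al be r (flow a b al be v p tau))
      else concat_traj a b al be r p
  end.

Fixpoint concat_end (a b al be : R) (l : list (R * R)) (p : R * R) : R * R :=
  match l with
  | nil => p
  | (v, tau) :: r =>
      if Rlt_dec 0 tau then concat_end a b al be r (flow a b al be v p tau)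
      else concat_end a b al be r p
  end.

Fixpoint concat_duration (l : list (R * R)) : R :=
  match l with
  | nil => 0
  | (v, tau) :: r => if Rlt_dec 0 tau then tau + concat_duration r else concat_duration r
  end.

Definition values_in (us uS : R) (l : list (R * R)) : Prop :=
  forall ph, In ph l -> us <= fst ph <= uS.

Lemma concat_duration_nonneg l : 0 <= concat_duration l.
Proof. induction l as [|[v tau] r IH]; simpl; [lra|]. destruct (Rlt_dec 0 tau); lra. Qed.

Lemma concat_control_init l : exists e, 0 < e /\ forall s, s < e -> concat_control l s = concat_control l 0.
Proof.
  induction l as [|[v tau] r IH]; simpl.
  - exists 1; split; auto; lra.
  - destruct (Rlt_dec 0 tau); auto.
    exists tau; split; auto. intros s Hs. unfold prepend_control.
    destruct (Rlt_dec s tau); [|lra]. destruct (Rlt_dec 0 tau); [auto|lra].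
Qed.

Lemma concat_traj_t0 a b al be l p : concat_traj a b al be l p 0 = p.
Proof.
  revert p; induction l as [|[v tau] r IH]; intros p; simpl; [apply flow_t0|].
  destruct (Rlt_dec 0 tau); auto. unfold prepend_traj. destruct (Rle_dec 0 tau); [apply flow_t0|lra].
Qed.

Lemma concat_is_solution a b al be us uS l p : us <= 0 <= uS -> values_in us uS l ->
  admissible us uS (concat_control l) /\
  is_solution a b al be (concat_control l) p (concat_traj a b al be l p).
Proof.
  intros H0. revert p; induction l as [|[v tau] r IH]; intros p Hl.
  - split; [apply admissible_const; auto|apply flow_is_solution].
  - assert (Hv : us <= v <= uS) by (apply (Hl (v, tau)); left; auto).
    assert (Hr : values_in us uS r) by (intros ph Hph; apply Hl; right; auto).
    simpl. destruct (Rlt_dec 0 tau) as [Ht|Ht]; [|apply IH; auto].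
    destruct (IH (flow a b al be v p tau) Hr) as [[Hpc Hb] Hs].
    split; [split|].
    + apply prepend_control_pwc; auto.
    + intros t. unfold prepend_control. destruct (Rlt_dec t tau); auto.
    + apply prepend_is_solution; auto. apply concat_control_init.
Qed.

Lemma concat_traj_duration a b al be l p :
  concat_traj a b al be l p (concat_duration l) = concat_end a b al be l p.
Proof.
  revert p; induction l as [|[v tau] r IH]; intros p; simpl; [apply flow_t0|].
  destruct (Rlt_dec 0 tau); auto. unfold prepend_traj.
  destruct (Rle_dec (tau + concat_duration r) tau).
  - assert (concat_duration r = 0) by (pose proof (concat_duration_nonneg r); lra).
    rewrite <- IH, H, concat_traj_t0. f_equal; ring.
  - rewrite <- IH. f_equal. ring.
Qed.

Lemma concat_end_cons a b al be v tau r p : 0 <= tau ->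
  concat_end a b al be ((v, tau) :: r) p = concat_end a b al be r (flow a b al be v p tau).
Proof.
  intros H. simpl. destruct (Rlt_dec 0 tau); auto.
  replace tau with 0 by lra. rewrite flow_t0. auto.
Qed.

Lemma pos_orbit_concat_end a b al be us uS l p : us <= 0 <= uS -> values_in us uS l ->
  pos_orbit a b al be us uS p (concat_end a b al be l p).
Proof.
  intros H0 Hl. destruct (concat_is_solution a b al be us uS l p H0 Hl) as [Ha Hs].
  exists (concat_control l), (concat_traj a b al be l p), (concat_duration l).
  split; [auto|split; [auto|split; [apply concat_duration_nonneg|apply concat_traj_duration]]].
Qed.

(** * Comparison along solutions *)

Definition rate_min (us uS al : R) : R := Rmin (us * al) (uS * al).
Definition rate_max (us uS al : R) : R := Rmax (us * al) (uS * al).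

Lemma rate_bounds us uS al v : us <= v <= uS -> rate_min us uS al <= v * al <= rate_max us uS al.
Proof.
  intros H. unfold rate_min, rate_max, Rmin, Rmax.
  destruct (Rle_dec (us * al) (uS * al)); destruct (Rle_lt_dec 0 al); split; nra.
Qed.

Lemma rate_min_neg_max_pos us uS al : us < 0 -> 0 < uS -> al <> 0 ->
  rate_min us uS al < 0 < rate_max us uS al.
Proof.
  intros H1 H2 H3. unfold rate_min, rate_max, Rmin, Rmax.
  destruct (Rle_dec (us * al) (uS * al)); destruct (Rlt_dec 0 al); split; nra.
Qed.

Lemma exp_lt_1 x : x < 0 -> exp x < 1.
Proof. intros H. rewrite <- exp_0. apply exp_increasing; auto. Qed.

Lemma one_lt_exp x : 0 < x -> 1 < exp x.
Proof. intros H. rewrite <- exp_0. apply exp_increasing; auto. Qed.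

Lemma exp_le_1 x : x <= 0 -> exp x <= 1.
Proof. intros H. destruct (Req_dec x 0) as [->|]; [rewrite exp_0; lra|]. left; apply exp_lt_1; lra. Qed.

Lemma one_le_exp x : 0 <= x -> 1 <= exp x.
Proof. intros H. destruct (Req_dec x 0) as [->|]; [rewrite exp_0; lra|]. left; apply one_lt_exp; lra. Qed.

Definition aff (al0 be0 ga : R) (q : R * R) : R := al0 * fst q + be0 * snd q + ga.

Lemma Rabs_le_bounds x y : Rabs x <= y -> - y <= x <= y.
Proof.
  intros H. pose proof (Rle_abs x). pose proof (Rabs_Ropp x). pose proof (Rle_abs (- x)). lra.
Qed.

Lemma aff_closure_lower (S : R * R -> Prop) al0 be0 ga B q :
  (forall s, S s -> B <= aff al0 be0 ga s) -> in_closure S q -> B <= aff al0 be0 ga q.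
Proof.
  intros HS Hc. destruct (Rle_dec B (aff al0 be0 ga q)) as [|Hn]; auto. exfalso.
  set (K := Rabs al0 + Rabs be0 + 1).
  pose proof (Rabs_pos al0). pose proof (Rabs_pos be0).
  set (eps := (B - aff al0 be0 ga q) / K).
  assert (He : 0 < eps) by (unfold eps, K; apply Rdiv_lt_0_compat; lra).
  destruct (Hc eps He) as [s [Hs [H1 H2]]].
  specialize (HS s Hs). unfold aff in *.
  assert (Hx : Rabs (al0 * (fst s - fst q)) <= Rabs al0 * eps)
    by (rewrite Rabs_mult; apply Rmult_le_compat_l; lra).
  assert (Hy : Rabs (be0 * (snd s - snd q)) <= Rabs be0 * eps)
    by (rewrite Rabs_mult; apply Rmult_le_compat_l; lra).
  apply Rabs_le_bounds in Hx. apply Rabs_le_bounds in Hy.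
  assert (K * eps = B - (al0 * fst q + be0 * snd q + ga)) by (unfold eps, K; field; lra).
  unfold K in *. nra.
Qed.

Lemma aff_near al0 be0 ga e c : 0 < c -> exists eps, 0 < eps /\ forall q,
  Rabs (fst q - fst e) < eps -> Rabs (snd q - snd e) < eps ->
  Rabs (aff al0 be0 ga q - aff al0 be0 ga e) < c.
Proof.
  intros Hc. pose proof (Rabs_pos al0). pose proof (Rabs_pos be0).
  set (K := Rabs al0 + Rabs be0 + 1).
  exists (c / K). split; [unfold K; apply Rdiv_lt_0_compat; lra|]. intros q H1 H2. unfold aff.
  replace (al0 * fst q + be0 * snd q + ga - (al0 * fst e + be0 * snd e + ga)) with
    (al0 * (fst q - fst e) + be0 * (snd q - snd e)) by ring.
  eapply Rle_lt_trans; [apply Rabs_triang|]. rewrite !Rabs_mult.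
  assert (Rabs al0 * Rabs (fst q - fst e) <= Rabs al0 * (c / K)) by (apply Rmult_le_compat_l; lra).
  assert (Rabs be0 * Rabs (snd q - snd e) <= Rabs be0 * (c / K)) by (apply Rmult_le_compat_l; lra).
  assert (K * (c / K) = c) by (unfold K; field; lra).
  assert (0 < c / K) by (unfold K; apply Rdiv_lt_0_compat; lra).
  unfold K in *. nra.
Qed.

Lemma solution_continuous_x a b al be u p gam : is_solution a b al be u p gam ->
  forall t, continuity_pt (fun s => fst (gam s)) t.
Proof. intros [_ [H _]] t. apply H. Qed.

Lemma solution_continuous_y a b al be u p gam : is_solution a b al be u p gam ->
  forall t, continuity_pt (fun s => snd (gam s)) t.
Proof. intros [_ [H _]] t. apply H. Qed.

Lemma solution_continuous_aff a b al be u p gam al0 be0 ga : is_solution a b al be u p gam ->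
  forall t, continuity_pt (fun s => aff al0 be0 ga (gam s)) t.
Proof.
  intros Hs t. unfold aff.
  apply continuity_pt_plus; [apply continuity_pt_plus|apply continuity_pt_const; intros ? ?; auto].
  - apply (continuity_pt_scal (fun s => fst (gam s))). apply (solution_continuous_x _ _ _ _ _ _ _ Hs).
  - apply (continuity_pt_scal (fun s => snd (gam s))). apply (solution_continuous_y _ _ _ _ _ _ _ Hs).
Qed.

Lemma dlim_aff_solution a b al be u p gam (al0 be0 ga : R) t :
  is_solution a b al be u p gam -> locally_const u t ->
  derivable_pt_lim (fun s => aff al0 be0 ga (gam s)) t
    (al0 * (u t * al * fst (gam t)) +
     be0 * (a * (fst (gam t) - 1) + b * snd (gam t) + u t * fst (gam t) * be)).
Proof.
  intros [_ [_ Hd]] Hl. destruct (Hd t Hl) as [Dx Dy]. unfold field in Dx, Dy; simpl in Dx, Dy.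
  unfold aff. eapply dlim_eq.
  2: { apply dlim_plus; [apply dlim_plus|apply dlim_const]; apply dlim_scal; [apply Dx|apply Dy]. }
  ring.
Qed.

(* [x^2 exp (-2 rate_min t)] is nondecreasing along solutions, so [x] never vanishes. *)
Lemma solution_x_sq_lower a b al be us uS u p gam : admissible us uS u ->
  is_solution a b al be u p gam -> forall t, 0 <= t ->
  (fst p) ^ 2 <= (fst (gam t)) ^ 2 * exp (-2 * rate_min us uS al * t).
Proof.
  intros [Hpc Hb] Hs t Ht. set (lm := rate_min us uS al).
  replace ((fst p) ^ 2) with ((fst (gam 0)) ^ 2 * exp (-2 * lm * 0))
    by (destruct Hs as [H0 _]; rewrite H0, Rmult_0_r, exp_0; ring).
  apply (le_of_derivative_nonneg_pwc u (fun s => (fst (gam s)) ^ 2 * exp (-2 * lm * s))); auto.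
  - intros s _. apply continuity_pt_mult; [|apply continuity_pt_exp_scal].
    pose proof (solution_continuous_x _ _ _ _ _ _ _ Hs) as Cx.
    apply (continuity_pt_mult (fun s => fst (gam s)) (fun s => fst (gam s) * 1)); auto.
    apply (continuity_pt_mult (fun s => fst (gam s)) (fun s => 1)); auto.
    apply continuity_pt_const; intros ? ?; auto.
  - intros s Hs1 Hl. destruct Hs as [_ [_ Hd]]. destruct (Hd s Hl) as [Dx _].
    unfold field in Dx; simpl in Dx.
    eexists. split.
    + apply dlim_mult; [|apply dlim_exp_scal].
      apply (dlim_mult (fun s => fst (gam s)) (fun s => fst (gam s) * 1)); [apply Dx|].
      apply (dlim_mult (fun s => fst (gam s)) (fun s => 1)); [apply Dx|apply dlim_const].
    + pose proof (rate_bounds us uS al (u s) (Hb s)) as [Hl1 _]. fold lm in Hl1.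
      pose proof (exp_pos (-2 * lm * s)). pose proof (pow2_ge_0 (fst (gam s))).
      match goal with |- 0 <= ?L =>
        replace L with (2 * (fst (gam s)) ^ 2 * exp (-2 * lm * s) * (u s * al - lm)) by ring end.
      apply Rmult_le_pos; [|lra]. apply Rmult_le_pos; lra.
Qed.

Lemma solution_x_pos a b al be us uS u p gam : inG p -> admissible us uS u ->
  is_solution a b al be u p gam -> forall t, 0 <= t -> 0 < fst (gam t).
Proof.
  intros Hp Ha Hs. unfold inG in Hp.
  assert (NZ : forall t, 0 <= t -> fst (gam t) <> 0).
  { intros t Ht Hz. pose proof (solution_x_sq_lower a b al be us uS u p gam Ha Hs t Ht) as Key.
    rewrite Hz in Key. assert (0 < (fst p) ^ 2) by (apply pow_lt; auto).
    replace (0 ^ 2 * exp (-2 * rate_min us uS al * t)) with 0 in Key by ring. lra. }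
  intros t Ht. destruct (Rlt_le_dec 0 (fst (gam t))) as [|Hle]; auto. exfalso.
  assert (Hneg : fst (gam t) < 0) by (pose proof (NZ t Ht); lra).
  assert (Htp : 0 < t).
  { destruct (Req_dec t 0) as [->|]; [|lra]. destruct Hs as [H0 _]. rewrite H0 in Hneg. lra. }
  destruct (Ranalysis5.IVT_interv (fun s => - fst (gam s)) 0 t) as [z [Hz1 Hz2]]; auto.
  - intros s _. apply continuity_pt_opp. apply (solution_continuous_x _ _ _ _ _ _ _ Hs).
  - destruct Hs as [H0 _]. rewrite H0. simpl. lra.
  - simpl. lra.
  - apply (NZ z); lra.
Qed.

(* If the derivative of [aff] along every [f_v] is at most [b0 * aff], then
   [aff (gam t) exp (-b0 t)] is nonincreasing. *)
Lemma aff_comparison a b al be us uS (al0 be0 ga b0 : R) :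
  (forall v x y, us <= v <= uS -> 0 < x ->
     al0 * (v * al * x) + be0 * (a * (x - 1) + b * y + v * x * be) <= b0 * (al0 * x + be0 * y + ga)) ->
  forall u p gam, inG p -> admissible us uS u -> is_solution a b al be u p gam ->
  forall t, 0 <= t -> aff al0 be0 ga (gam t) <= aff al0 be0 ga p * exp (b0 * t).
Proof.
  intros Hc u p gam Hp Ha Hs t Ht.
  set (phi := fun s => aff al0 be0 ga (gam s)).
  assert (M : - (phi 0 * exp (- b0 * 0)) <= - (phi t * exp (- b0 * t))).
  { apply (le_of_derivative_nonneg_pwc u (fun s => - (phi s * exp (- b0 * s)))); auto; [apply Ha| |].
    - intros s _. apply continuity_pt_opp, continuity_pt_mult; [|apply continuity_pt_exp_scal].
      apply (solution_continuous_aff _ _ _ _ _ _ _ _ _ _ Hs).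
    - intros s Hs1 Hl. eexists. split.
      + apply (derivable_pt_lim_opp (fun s => phi s * exp (- b0 * s))).
        apply dlim_mult; [apply (dlim_aff_solution _ _ _ _ _ _ _ _ _ _ _ Hs Hl)|apply dlim_exp_scal].
      + assert (Hx : 0 < fst (gam s)) by (apply (solution_x_pos a b al be us uS u p gam); auto; lra).
        pose proof (Hc (u s) (fst (gam s)) (snd (gam s)) (proj2 Ha s) Hx).
        pose proof (exp_pos (- b0 * s)). unfold phi, aff.
        match goal with |- 0 <= - (?A * ?E + ?P * (- b0 * ?E)) =>
          replace (- (A * E + P * (- b0 * E))) with (E * (b0 * P - A)) by ring end.
        apply Rmult_le_pos; lra. }
  replace (aff al0 be0 ga p) with (phi 0) by (unfold phi; destruct Hs as [H0 _]; rewrite H0; auto).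
  change (phi t <= phi 0 * exp (b0 * t)).
  rewrite Rmult_0_r, exp_0, Rmult_1_r in M.
  assert (E : phi t * exp (- b0 * t) * exp (b0 * t) = phi t).
  { rewrite Rmult_assoc, <- exp_plus. replace (- b0 * t + b0 * t) with 0 by ring. rewrite exp_0; ring. }
  rewrite <- E. apply Rmult_le_compat_r; [left; apply exp_pos|lra].
Qed.

Lemma pos_orbit_aff_comparison a b al be us uS (al0 be0 ga b0 : R) p q :
  (forall v x y, us <= v <= uS -> 0 < x ->
     al0 * (v * al * x) + be0 * (a * (x - 1) + b * y + v * x * be) <= b0 * (al0 * x + be0 * y + ga)) ->
  inG p -> pos_orbit a b al be us uS p q ->
  exists t, 0 <= t /\ aff al0 be0 ga q <= aff al0 be0 ga p * exp (b0 * t).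
Proof.
  intros Hc Hp [u [gam [t [Ha [Hs [Ht <-]]]]]]. exists t. split; auto.
  apply (aff_comparison a b al be us uS al0 be0 ga b0 Hc u p gam Hp Ha Hs t Ht).
Qed.

Lemma aff_decrease a b al be us uS (al0 be0 ga K : R) (Q : R -> R * R -> Prop) u p gam t :
  inG p -> admissible us uS u -> is_solution a b al be u p gam -> 0 <= t ->
  (forall s, 0 <= s <= t -> Q s (gam s)) ->
  (forall s v x y, 0 <= s <= t -> Q s (x, y) -> us <= v <= uS -> 0 < x ->
     al0 * (v * al * x) + be0 * (a * (x - 1) + b * y + v * x * be) <= - K) ->
  aff al0 be0 ga (gam t) + K * t <= aff al0 be0 ga p.
Proof.
  intros Hp Ha Hs Ht HQ Hc.
  set (phi := fun s => aff al0 be0 ga (gam s)).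
  assert (M : - (phi 0 + K * 0) <= - (phi t + K * t)).
  { apply (le_of_derivative_nonneg_pwc u (fun s => - (phi s + K * s))); auto; [apply Ha| |].
    - intros s _. apply continuity_pt_opp, continuity_pt_plus.
      + apply (solution_continuous_aff _ _ _ _ _ _ _ _ _ _ Hs).
      + apply (continuity_pt_scal (fun s => s)). apply derivable_continuous_pt, derivable_pt_id.
    - intros s Hs1 Hl. eexists. split.
      + apply (derivable_pt_lim_opp (fun s => phi s + K * s)).
        apply dlim_plus; [apply (dlim_aff_solution _ _ _ _ _ _ _ _ _ _ _ Hs Hl)|apply dlim_scal, dlim_id].
      + assert (Hx : 0 < fst (gam s)) by (apply (solution_x_pos a b al be us uS u p gam); auto; lra).
        assert (HQs : Q s (fst (gam s), snd (gam s))) by (rewrite <- surjective_pairing; apply HQ; lra).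
        pose proof (Hc s (u s) (fst (gam s)) (snd (gam s)) ltac:(lra) HQs (proj2 Ha s) Hx). lra. }
  replace (aff al0 be0 ga p) with (phi 0) by (unfold phi; destruct Hs as [H0 _]; rewrite H0; auto).
  unfold phi in *. lra.
Qed.

(** * Exclusion principles for control sets *)

(* A point [d] from which one can only move to where [aff] is bounded away above its
   value at [d] cannot be approximately reached again, hence lies in no control set. *)
Lemma cs_props_excludes a b al be us uS (al0 be0 ga : R) (P : R * R -> Prop) (D : R * R -> Prop) :
  cs_props a b al be us uS D ->
  (forall p, inG p -> P p -> forall u gam, admissible us uS u -> is_solution a b al be u p gam ->
     exists B, aff al0 be0 ga p < B /\
       forall u' gam' t, admissible us uS u' -> is_solution a b al be u' (gam 1) gam' -> 0 <= t ->
         B <= aff al0 be0 ga (gam' t)) ->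
  forall d, D d -> ~ P d.
Proof.
  intros [HG [Hi Hii]] H d Hd Hp.
  destruct (Hi d Hd) as [u [gam [Ha [Hs Hin]]]].
  destruct (H d (HG d Hd) Hp u gam Ha Hs) as [B [HB1 HB2]].
  assert (Hd' : D (gam 1)) by (apply Hin; lra).
  assert (B <= aff al0 be0 ga d).
  { apply (aff_closure_lower (pos_orbit a b al be us uS (gam 1))); [|exact (Hii (gam 1) Hd' d Hd)].
    intros s [u' [g' [t [Ha' [Hs' [Ht <-]]]]]]. apply (HB2 u' g' t); auto. }
  lra.
Qed.

Lemma cs_props_aff_nonpos_decay a b al be us uS (al0 be0 ga b0 : R) D : b0 < 0 ->
  (forall v x y, us <= v <= uS -> 0 < x ->
     al0 * (v * al * x) + be0 * (a * (x - 1) + b * y + v * x * be) <= b0 * (al0 * x + be0 * y + ga)) ->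
  cs_props a b al be us uS D -> forall d, D d -> aff al0 be0 ga d <= 0.
Proof.
  intros Hb0 Hc Hcs d Hd.
  destruct (Rle_dec (aff al0 be0 ga d) 0) as [|Hn]; auto. exfalso.
  apply (cs_props_excludes a b al be us uS (- al0) (- be0) (- ga) (fun p => 0 < aff al0 be0 ga p) D Hcs)
    with d; auto; [|lra].
  intros p Hp Hpos u gam Ha Hs.
  pose proof (aff_comparison a b al be us uS al0 be0 ga b0 Hc u p gam Hp Ha Hs 1 ltac:(lra)) as H1.
  assert (He : exp (b0 * 1) < 1) by (apply exp_lt_1; lra).
  pose proof (exp_pos (b0 * 1)).
  exists (- Rmax (aff al0 be0 ga p * exp (b0 * 1)) 0). split.
  - assert (Rmax (aff al0 be0 ga p * exp (b0 * 1)) 0 < aff al0 be0 ga p) by (apply Rmax_lub_lt; [nra|lra]).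
    unfold aff in *; lra.
  - intros u' gam' t Ha' Hs' Ht.
    assert (Hp1 : inG (gam 1)) by (unfold inG; apply (solution_x_pos a b al be us uS u p gam); auto; lra).
    pose proof (aff_comparison a b al be us uS al0 be0 ga b0 Hc u' (gam 1) gam' Hp1 Ha' Hs' t Ht) as H2.
    assert (He2 : exp (b0 * t) <= 1) by (apply exp_le_1; nra).
    pose proof (exp_pos (b0 * t)).
    assert (aff al0 be0 ga (gam' t) <= Rmax (aff al0 be0 ga p * exp (b0 * 1)) 0).
    { revert H1 H2. generalize (aff al0 be0 ga (gam 1)). intros z H1 H2.
      apply Rle_trans with (z * exp (b0 * t)); auto.
      destruct (Rle_dec 0 z).
      - apply Rle_trans with z; [nra|]. apply Rle_trans with (2 := Rmax_l _ _). lra.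
      - apply Rle_trans with 0; [nra|apply Rmax_r]. }
    unfold aff in *. lra.
Qed.

Lemma cs_props_aff_nonpos_growth a b al be us uS (al0 be0 ga b0 : R) D : 0 < b0 ->
  (forall v x y, us <= v <= uS -> 0 < x ->
     b0 * (al0 * x + be0 * y + ga) <= al0 * (v * al * x) + be0 * (a * (x - 1) + b * y + v * x * be)) ->
  cs_props a b al be us uS D -> forall d, D d -> aff al0 be0 ga d <= 0.
Proof.
  intros Hb0 Hc Hcs d Hd.
  assert (Hc' : forall v x y, us <= v <= uS -> 0 < x ->
     (- al0) * (v * al * x) + (- be0) * (a * (x - 1) + b * y + v * x * be)
       <= b0 * ((- al0) * x + (- be0) * y + (- ga))).
  { intros v x y Hv Hx. specialize (Hc v x y Hv Hx). lra. }
  destruct (Rle_dec (aff al0 be0 ga d) 0) as [|Hn]; auto. exfalso.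
  apply (cs_props_excludes a b al be us uS al0 be0 ga (fun p => 0 < aff al0 be0 ga p) D Hcs)
    with d; auto; [|lra].
  intros p Hp Hpos u gam Ha Hs.
  pose proof (aff_comparison a b al be us uS _ _ _ b0 Hc' u p gam Hp Ha Hs 1 ltac:(lra)) as H1.
  assert (He : 1 < exp (b0 * 1)) by (apply one_lt_exp; lra).
  exists (aff al0 be0 ga p * exp (b0 * 1)). split; [nra|].
  intros u' gam' t Ha' Hs' Ht.
  assert (Hp1 : inG (gam 1)) by (unfold inG; apply (solution_x_pos a b al be us uS u p gam); auto; lra).
  pose proof (aff_comparison a b al be us uS _ _ _ b0 Hc' u' (gam 1) gam' Hp1 Ha' Hs' t Ht) as H2.
  assert (He2 : 1 <= exp (b0 * t)) by (apply one_le_exp; nra).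
  unfold aff in *.
  assert (0 < al0 * fst (gam 1) + be0 * snd (gam 1) + ga) by nra.
  nra.
Qed.

Lemma aff_nonpos_invariant a b al be us uS (al0 be0 ga b0 : R) :
  (forall v x y, us <= v <= uS -> 0 < x ->
     al0 * (v * al * x) + be0 * (a * (x - 1) + b * y + v * x * be) <= b0 * (al0 * x + be0 * y + ga)) ->
  forall u p gam, inG p -> admissible us uS u -> is_solution a b al be u p gam ->
  aff al0 be0 ga p <= 0 -> forall t, 0 <= t -> aff al0 be0 ga (gam t) <= 0.
Proof.
  intros Hc u p gam Hp Ha Hs Hq t Ht.
  pose proof (aff_comparison a b al be us uS al0 be0 ga b0 Hc u p gam Hp Ha Hs t Ht).
  pose proof (exp_pos (b0 * t)). nra.
Qed.

Lemma solution_x_lower a b al be us uS u p gam : inG p -> admissible us uS u ->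
  is_solution a b al be u p gam ->
  forall t, 0 <= t -> fst p * exp (rate_min us uS al * t) <= fst (gam t).
Proof.
  intros Hp Ha Hs t Ht.
  assert (Hxlb : forall v x y, us <= v <= uS -> 0 < x ->
     (-1) * (v * al * x) + 0 * (a * (x - 1) + b * y + v * x * be) <= rate_min us uS al * ((-1) * x + 0 * y + 0)).
  { intros v x y Hv Hx. pose proof (rate_bounds us uS al v Hv) as [H1 _]. nra. }
  pose proof (aff_comparison a b al be us uS (-1) 0 0 _ Hxlb u p gam Hp Ha Hs t Ht).
  unfold aff in *. lra.
Qed.

(* If [aff p1 p2 p3] increases at a rate proportional to [x] on the forward invariant region
   [aff q1 q2 q3 <= 0], no control set meets that region. *)
Lemma cs_props_aff_pos_strict a b al be us uS (p1 p2 p3 q1 q2 q3 kap b0 : R) D :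
  us < 0 -> 0 < uS -> al <> 0 -> 0 < kap ->
  (forall v x y, us <= v <= uS -> 0 < x ->
     q1 * (v * al * x) + q2 * (a * (x - 1) + b * y + v * x * be) <= b0 * (q1 * x + q2 * y + q3)) ->
  (forall v x y, us <= v <= uS -> 0 < x -> q1 * x + q2 * y + q3 <= 0 ->
     kap * x <= p1 * (v * al * x) + p2 * (a * (x - 1) + b * y + v * x * be)) ->
  cs_props a b al be us uS D -> forall d, D d -> 0 < aff q1 q2 q3 d.
Proof.
  intros Hus HuS Hal Hkap Hpsi Hphi Hcs d Hd.
  set (lm := rate_min us uS al).
  assert (Hlm : lm < 0) by (apply (rate_min_neg_max_pos us uS al); auto).
  assert (Inv : forall u p gam, inG p -> admissible us uS u -> is_solution a b al be u p gam ->
     aff q1 q2 q3 p <= 0 -> forall s, 0 <= s -> aff q1 q2 q3 (gam s) <= 0)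
    by (intros; eapply aff_nonpos_invariant; eauto).
  destruct (Rlt_le_dec 0 (aff q1 q2 q3 d)) as [|Hle]; auto. exfalso.
  apply (cs_props_excludes a b al be us uS p1 p2 p3 (fun p => aff q1 q2 q3 p <= 0) D Hcs) with d; auto.
  intros p Hp Hq u gam Ha Hs.
  pose proof (solution_x_lower a b al be us uS u p gam Hp Ha Hs) as Hx1. fold lm in Hx1.
  set (xm := fst p * exp lm).
  assert (Hxm : 0 < xm) by (unfold xm; apply Rmult_lt_0_compat; [apply Hp|apply exp_pos]).
  assert (L1 : aff (- p1) (- p2) (- p3) (gam 1) + kap * xm * 1 <= aff (- p1) (- p2) (- p3) p).
  { apply (aff_decrease a b al be us uS _ _ _ _ (fun s q => aff q1 q2 q3 q <= 0 /\ xm <= fst q) u);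
      auto; try lra.
    - intros s Hs0. split; [apply (Inv u p gam); auto; lra|].
      unfold xm. apply Rle_trans with (fst p * exp (lm * s)); [|apply Hx1; lra].
      apply Rmult_le_compat_l; [left; apply Hp|].
      destruct (Req_dec s 1) as [->|]; [rewrite Rmult_1_r; lra|left; apply exp_increasing; nra].
    - intros s v x y _ [Hq1 Hq2] Hv Hx. unfold aff in Hq1; simpl in Hq1, Hq2.
      pose proof (Hphi v x y Hv Hx Hq1). nra. }
  exists (aff p1 p2 p3 (gam 1)). split.
  - unfold aff in *. assert (0 < kap * xm) by nra. lra.
  - intros u' gam' t Ha' Hs' Ht.
    assert (Hp1 : inG (gam 1)) by (unfold inG; apply (solution_x_pos a b al be us uS u p gam); auto; lra).
    assert (Hq1 : aff q1 q2 q3 (gam 1) <= 0) by (apply (Inv u p gam); auto; lra).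
    assert (L2 : aff (- p1) (- p2) (- p3) (gam' t) + 0 * t <= aff (- p1) (- p2) (- p3) (gam 1)).
    { apply (aff_decrease a b al be us uS _ _ _ _ (fun s q => aff q1 q2 q3 q <= 0) u'); auto.
      - intros s Hs0. apply (Inv u' (gam 1) gam'); auto; lra.
      - intros s v x y _ Hq' Hv Hx. unfold aff in Hq'; simpl in Hq'.
        pose proof (Hphi v x y Hv Hx Hq'). nra. }
    unfold aff in *. lra.
Qed.

Lemma control_set_of_greatest a b al be us uS C :
  cs_props a b al be us uS C ->
  (forall D, cs_props a b al be us uS D -> forall p, D p -> C p) ->
  control_set a b al be us uS C /\
  (forall D, control_set a b al be us uS D -> forall p, D p <-> C p).
Proof.
  intros Hc Hmax. split.
  - split; auto. intros D HD Hsub p. split; auto. apply Hmax; auto.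
  - intros D [HD HDm] p. symmetry. apply (HDm C Hc (Hmax D HD) p).
Qed.

(** * The case [al = 0]: one control set on each of infinitely many lines [x = x0] *)

Lemma flow_x_al0 a b be v p t : fst (flow a b 0 be v p t) = fst p.
Proof. unfold flow; simpl. rewrite Rmult_0_r, Rmult_0_l, exp_0. ring. Qed.

Lemma flow_y_al0 a b be v p t ys :
  a * (fst p - 1) + v * fst p * be = - b * ys ->
  snd (flow a b 0 be v p t) = ys + exp (b * t) * (snd p - ys).
Proof.
  intros Hc. unfold flow; simpl. replace (v * 0 - b) with (- b) by ring.
  replace (exp (b * t) * (snd p + (a + v * be) * fst p * int_exp (- b) t - a * int_exp (- b) t))
    with (exp (b * t) * snd p + (a * (fst p - 1) + v * fst p * be) * (exp (b * t) * int_exp (- b) t)) by ring.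
  rewrite Hc.
  replace (- b * ys * (exp (b * t) * int_exp (- b) t)) with (- ys * (b * (exp (b * t) * int_exp (- b) t)))
    by ring.
  rewrite exp_mul_int_exp_opp. ring.
Qed.

Lemma flow_y_al0_b0 a be v p t :
  snd (flow a 0 0 be v p t) = snd p + (a * (fst p - 1) + v * fst p * be) * t.
Proof.
  unfold flow; simpl. replace (v * 0 - 0) with 0 by ring. replace (- 0) with 0 by ring.
  rewrite !int_exp_mu0, Rmult_0_l, exp_0. ring.
Qed.

Lemma exp_mul_small b M eps : b < 0 -> 0 <= M -> 0 < eps -> exists t, 0 <= t /\ exp (b * t) * M < eps.
Proof.
  intros Hb HM He.
  assert (Hq : 0 < eps / (M + 1)) by (apply Rdiv_lt_0_compat; lra).
  assert (Heps : eps = eps / (M + 1) * (M + 1)) by (field; lra).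
  destruct (Rle_dec 1 (eps / (M + 1))) as [H1|H1].
  - exists 0. split; [lra|]. rewrite Rmult_0_r, exp_0. nra.
  - exists (ln (eps / (M + 1)) / b).
    assert (Hl : ln (eps / (M + 1)) < 0) by (rewrite <- ln_1; apply ln_increasing; lra).
    split.
    + unfold Rdiv. assert (/ b < 0) by (apply Rinv_lt_0_compat; auto). nra.
    + replace (b * (ln (eps / (M + 1)) / b)) with (ln (eps / (M + 1))) by (field; lra).
      rewrite exp_ln by auto. nra.
Qed.

Lemma closure_orbit_x_al0 a b be us uS p d : us <= 0 <= uS -> inG p ->
  in_closure (pos_orbit a b 0 be us uS p) d -> fst d = fst p.
Proof.
  intros H0 Hp Hc.
  assert (H1 : fst p <= aff 1 0 0 d).
  { apply (aff_closure_lower (pos_orbit a b 0 be us uS p)); [|exact Hc]. intros s Hs.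
    destruct (pos_orbit_aff_comparison a b 0 be us uS (-1) 0 0 0 p s) as [t [_ Ht]]; auto.
    - intros; lra.
    - rewrite Rmult_0_l, exp_0 in Ht. unfold aff in *. lra. }
  assert (H2 : - fst p <= aff (-1) 0 0 d).
  { apply (aff_closure_lower (pos_orbit a b 0 be us uS p)); [|exact Hc]. intros s Hs.
    destruct (pos_orbit_aff_comparison a b 0 be us uS 1 0 0 0 p s) as [t [_ Ht]]; auto.
    - intros; lra.
    - rewrite Rmult_0_l, exp_0 in Ht. unfold aff in *. lra. }
  unfold aff in *. lra.
Qed.

(* [be] times the velocity [y'] under the control [w], which increases with [w];
   it vanishes at the equilibrium of the control [w] on the line through [q]. *)
Definition equilibrium_gap a b be w := aff (be * a + w * be * be) (be * b) (- (be * a)).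

Lemma equilibrium_gap_eq a b be w q :
  equilibrium_gap a b be w q = be * (b * snd q + a * (fst q - 1) + w * be * fst q).
Proof. unfold equilibrium_gap, aff. ring. Qed.

Definition line_equilibrium a b be w x0 : R * R := (x0, - (a * (x0 - 1) + w * be * x0) / b).

Lemma control_set_al0_b_pos a b be us uS x0 : 0 < b -> be <> 0 -> us < 0 -> 0 < uS -> 0 < x0 ->
  control_set a b 0 be us uS (fun q => q = line_equilibrium a b be us x0).
Proof.
  intros Hb Hbe Hus HuS Hx0.
  set (pt := line_equilibrium a b be us x0).
  assert (Hc : a * (fst pt - 1) + us * fst pt * be = - b * snd pt)
    by (unfold pt, line_equilibrium; simpl; field; lra).
  assert (Hgap : forall v x y, us <= v <= uS -> 0 < x ->
    b * ((be * a + us * be * be) * x + (be * b) * y + - (be * a))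
      <= (be * a + us * be * be) * (v * 0 * x) + (be * b) * (a * (x - 1) + b * y + v * x * be)).
  { intros v x y Hv Hx. assert (0 <= b * (be * be) * x * (v - us)).
    { apply Rmult_le_pos; [|lra]. apply Rmult_le_pos; [|lra]. apply Rmult_le_pos; [lra|nra]. }
    nra. }
  split; [split; [|split]|].
  - intros p ->. unfold inG, pt; simpl. lra.
  - intros p ->. exists (fun _ => us), (flow a b 0 be us pt). split; [apply admissible_const; lra|].
    split; [apply flow_is_solution|]. intros t _.
    apply injective_projections; [apply flow_x_al0|].
    rewrite (flow_y_al0 a b be us pt t (snd pt) Hc). ring.
  - intros p -> q ->. apply in_closure_pos_orbit, pos_orbit_refl; lra.
  - intros D HD Hsub p. split; [|apply Hsub]. intros Hp.
    assert (HptD : D pt) by (apply Hsub; auto).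
    assert (Hcl : in_closure (pos_orbit a b 0 be us uS pt) p) by (apply (proj2 (proj2 HD)); auto).
    assert (Hx : fst p = x0)
      by (apply (closure_orbit_x_al0 a b be us uS pt p); auto; try lra; unfold inG, pt; simpl; lra).
    assert (H1 : equilibrium_gap a b be us p <= 0).
    { apply (cs_props_aff_nonpos_growth a b 0 be us uS _ _ _ b D Hb Hgap HD p Hp). }
    assert (H2 : 0 <= equilibrium_gap a b be us p).
    { apply (aff_closure_lower (pos_orbit a b 0 be us uS pt)); [|exact Hcl]. intros s Hs.
      destruct (pos_orbit_aff_comparison a b 0 be us uS
                  (- (be * a + us * be * be)) (- (be * b)) (be * a) b pt s)
        as [t [_ Ht]]; [|unfold inG, pt; simpl; lra|auto|].
      - intros v x y Hv Hx'. pose proof (Hgap v x y Hv Hx'). lra.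
      - assert (E0 : aff (- (be * a + us * be * be)) (- (be * b)) (be * a) pt = 0)
          by (unfold aff, pt, line_equilibrium; simpl; field; lra).
        rewrite E0 in Ht. unfold aff in Ht. unfold equilibrium_gap, aff. lra. }
    rewrite equilibrium_gap_eq in H1, H2.
    destruct p as [px py]. simpl in *. subst px. unfold pt, line_equilibrium. f_equal.
    apply Rmult_eq_reg_l with (be * b); [|apply Rmult_integral_contrapositive; split; lra].
    field_simplify; [nra|lra].
Qed.

Definition equilibrium_band a b be us uS x0 (q : R * R) : Prop :=
  fst q = x0 /\ equilibrium_gap a b be us q <= 0 /\ 0 <= equilibrium_gap a b be uS q.

Lemma equilibrium_band_control a b be us uS x0 q : be <> 0 -> 0 < x0 ->
  equilibrium_band a b be us uS x0 q ->
  exists v, us <= v <= uS /\ a * (fst q - 1) + v * fst q * be = - b * snd q.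
Proof.
  intros Hbe Hx0 [Hq [H1 H2]]. rewrite equilibrium_gap_eq in H1, H2. rewrite Hq in *.
  pose proof (Rsqr_pos_lt be Hbe) as Hbe2. unfold Rsqr in Hbe2.
  assert (Hk : 0 < be * be * x0) by nra.
  exists (- (b * snd q + a * (x0 - 1)) / (be * x0)).
  assert (E : - (b * snd q + a * (x0 - 1)) / (be * x0) * (be * be * x0) = - (be * (b * snd q + a * (x0 - 1))))
    by (field; split; lra).
  split; [split|].
  - apply Rmult_le_reg_r with (be * be * x0); auto. rewrite E. nra.
  - apply Rmult_le_reg_r with (be * be * x0); auto. rewrite E. nra.
  - field; split; lra.
Qed.

Lemma line_equilibrium_in_band a b be us uS x0 : b <> 0 -> us < uS -> 0 < x0 ->
  equilibrium_band a b be us uS x0 (line_equilibrium a b be us x0).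
Proof.
  intros Hb Hu Hx0. unfold equilibrium_band, line_equilibrium.
  rewrite !equilibrium_gap_eq. simpl. split; auto.
  replace (b * (- (a * (x0 - 1) + us * be * x0) / b)) with (- (a * (x0 - 1) + us * be * x0)) by (field; lra).
  split.
  - match goal with |- ?L <= 0 => replace L with 0 by ring end. lra.
  - match goal with |- 0 <= ?L => replace L with ((be * be) * x0 * (uS - us)) by ring end.
    apply Rmult_le_pos; [|lra]. apply Rmult_le_pos; [nra|lra].
Qed.

Lemma equilibrium_band_cs_props a b be us uS x0 : b < 0 -> be <> 0 -> us < 0 -> 0 < uS -> 0 < x0 ->
  cs_props a b 0 be us uS (equilibrium_band a b be us uS x0).
Proof.
  intros Hb Hbe Hus HuS Hx0. split; [|split].
  - intros p [Hp _]. unfold inG. lra.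
  - intros p Hp. destruct (equilibrium_band_control a b be us uS x0 p Hbe Hx0 Hp) as [v [Hv Hc]].
    exists (fun _ => v), (flow a b 0 be v p). split; [apply admissible_const; lra|].
    split; [apply flow_is_solution|]. intros t _.
    replace (flow a b 0 be v p t) with p; auto.
    apply injective_projections; [rewrite flow_x_al0; auto|].
    rewrite (flow_y_al0 a b be v p t (snd p) Hc). ring.
  - intros p [Hp1 _] q Hq.
    (* steer with the control whose equilibrium is [q]; [y] converges to [snd q] *)
    destruct (equilibrium_band_control a b be us uS x0 q Hbe Hx0 Hq) as [v [Hv Hc]].
    destruct Hq as [Hq1 _].
    intros eps He.
    destruct (exp_mul_small b (Rabs (snd p - snd q)) eps Hb (Rabs_pos _) He) as [t [Ht Hsm]].
    exists (flow a b 0 be v p t). split; [apply pos_orbit_flow; auto|].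
    rewrite flow_x_al0, Hp1, Hq1, Rminus_diag, Rabs_R0. split; [lra|].
    rewrite (flow_y_al0 a b be v p t (snd q)) by (rewrite Hp1, <- Hq1; auto).
    replace (snd q + exp (b * t) * (snd p - snd q) - snd q) with (exp (b * t) * (snd p - snd q)) by ring.
    rewrite Rabs_mult, Rabs_pos_eq by (left; apply exp_pos). auto.
Qed.

Lemma control_set_al0_b_neg a b be us uS x0 : b < 0 -> be <> 0 -> us < 0 -> 0 < uS -> 0 < x0 ->
  control_set a b 0 be us uS (equilibrium_band a b be us uS x0).
Proof.
  intros Hb Hbe Hus HuS Hx0.
  split; [apply equilibrium_band_cs_props; auto|].
  intros D HD Hsub p. split; [|apply Hsub]. intros Hp.
  set (pt := line_equilibrium a b be us x0).
  assert (HptD : D pt) by (apply Hsub, line_equilibrium_in_band; lra).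
  assert (Hcl : in_closure (pos_orbit a b 0 be us uS pt) p) by (apply (proj2 (proj2 HD)); auto).
  split; [apply (closure_orbit_x_al0 a b be us uS pt p); auto; try lra; unfold inG, pt; simpl; lra|].
  split.
  - apply (cs_props_aff_nonpos_decay a b 0 be us uS _ _ _ b D Hb); auto.
    intros v x y Hv Hx'. assert (0 <= - b * (be * be) * x * (v - us)).
    { apply Rmult_le_pos; [|lra]. apply Rmult_le_pos; [|lra]. apply Rmult_le_pos; nra. }
    nra.
  - assert (aff (- (be * a + uS * be * be)) (- (be * b)) (be * a) p <= 0).
    { apply (cs_props_aff_nonpos_decay a b 0 be us uS _ _ _ b D Hb); auto.
      intros v x y Hv Hx'. assert (0 <= - b * (be * be) * x * (uS - v)).
      { apply Rmult_le_pos; [|lra]. apply Rmult_le_pos; [|lra]. apply Rmult_le_pos; nra. }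
      nra. }
    unfold equilibrium_gap, aff in *. lra.
Qed.

Lemma pos_orbit_al0_b0 a be us uS v p q : us <= v <= uS -> fst q = fst p ->
  a * (fst p - 1) + v * fst p * be <> 0 ->
  0 <= (snd q - snd p) / (a * (fst p - 1) + v * fst p * be) ->
  pos_orbit a 0 0 be us uS p q.
Proof.
  intros Hv Hx Hc Ht.
  replace q with (flow a 0 0 be v p ((snd q - snd p) / (a * (fst p - 1) + v * fst p * be))).
  - apply pos_orbit_flow; auto.
  - apply injective_projections; [rewrite flow_x_al0; auto|].
    rewrite flow_y_al0_b0. field. auto.
Qed.

Lemma control_set_al0_b0 a be us uS x0 : be <> 0 -> us < 0 -> 0 < uS -> 0 < x0 ->
  be * (a * (x0 - 1) + us * be * x0) < 0 -> 0 < be * (a * (x0 - 1) + uS * be * x0) ->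
  control_set a 0 0 be us uS (fun q => fst q = x0).
Proof.
  intros Hbe Hus HuS Hx0 H1 H2.
  assert (Hpn : exists v w, us <= v <= uS /\ us <= w <= uS /\
     0 < a * (x0 - 1) + v * x0 * be /\ a * (x0 - 1) + w * x0 * be < 0).
  { destruct (Rlt_dec 0 be).
    - exists uS, us. repeat split; try lra; nra.
    - exists us, uS. repeat split; try lra; nra. }
  destruct Hpn as [v [w [Hv [Hw [Hcv Hcw]]]]].
  split; [split; [|split]|].
  - intros p Hp. unfold inG. lra.
  - intros p Hp. exists (fun _ => 0), (flow a 0 0 be 0 p). split; [apply admissible_const; lra|].
    split; [apply flow_is_solution|]. intros t _. rewrite flow_x_al0. auto.
  - intros p Hp q Hq. apply in_closure_pos_orbit.
    destruct (Rle_dec (snd p) (snd q)).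
    + apply (pos_orbit_al0_b0 a be us uS v); try rewrite Hp; try lra.
      apply Rle_mult_inv_pos; lra.
    + apply (pos_orbit_al0_b0 a be us uS w); try rewrite Hp; try lra.
      replace ((snd q - snd p) / (a * (x0 - 1) + w * x0 * be))
        with ((snd p - snd q) / (- (a * (x0 - 1) + w * x0 * be))) by (field; lra).
      apply Rle_mult_inv_pos; lra.
  - intros D HD Hsub p. split; [|apply Hsub]. intros Hp.
    assert (HptD : D (x0, 0)) by (apply Hsub; auto).
    assert (Hcl : in_closure (pos_orbit a 0 0 be us uS (x0, 0)) p) by (apply (proj2 (proj2 HD)); auto).
    apply (closure_orbit_x_al0 a 0 be us uS (x0, 0) p); auto; try lra; unfold inG; simpl; lra.
Qed.

(* Near [x = 1] the drift [a (x - 1)] is dominated by the control term. *)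
Lemma al0_b0_sign_change a be us uS : be <> 0 -> us < 0 -> 0 < uS ->
  exists d0, 0 < d0 /\ forall d, 0 <= d < d0 ->
    be * (a * ((1 + d) - 1) + us * be * (1 + d)) < 0 /\ 0 < be * (a * ((1 + d) - 1) + uS * be * (1 + d)).
Proof.
  intros Hbe Hus HuS.
  pose proof (Rsqr_pos_lt be Hbe) as Hbe2. unfold Rsqr in Hbe2.
  set (m := Rmin (- us) uS * (be * be)).
  assert (Hm : 0 < m) by (unfold m; apply Rmult_lt_0_compat; [apply Rmin_pos; lra|lra]).
  assert (Hm1 : m <= - us * (be * be)) by (unfold m; apply Rmult_le_compat_r; [lra|apply Rmin_l]).
  assert (Hm2 : m <= uS * (be * be)) by (unfold m; apply Rmult_le_compat_r; [lra|apply Rmin_r]).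
  pose proof (Rabs_pos (a * be)) as HM.
  assert (Hab : - Rabs (a * be) <= a * be <= Rabs (a * be)) by (apply Rabs_le_bounds; lra).
  exists (m / (Rabs (a * be) + 1)). split; [apply Rdiv_lt_0_compat; lra|].
  intros d [Hd0 Hd].
  assert (Hmd : Rabs (a * be) * d < m).
  { apply Rle_lt_trans with (Rabs (a * be) * (m / (Rabs (a * be) + 1))); [apply Rmult_le_compat_l; lra|].
    replace (Rabs (a * be) * (m / (Rabs (a * be) + 1))) with (m - m / (Rabs (a * be) + 1)) by (field; lra).
    assert (0 < m / (Rabs (a * be) + 1)) by (apply Rdiv_lt_0_compat; lra). lra. }
  split; nra.
Qed.

Lemma control_sets_distinct (Cs : nat -> R * R -> Prop) (xs ys : nat -> R) :
  (forall n, Cs n (xs n, ys n)) -> (forall n q, Cs n q -> fst q = xs n) ->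
  (forall m n, xs m = xs n -> m = n) ->
  forall m n, m <> n -> exists p, ~ (Cs m p <-> Cs n p).
Proof.
  intros Hin Hline Hinj m n Hmn. exists (xs m, ys m). intros [H _].
  apply Hmn, Hinj. exact (Hline n _ (H (Hin m))).
Qed.

Lemma INR_plus_1_pos n : 0 < INR n + 1.
Proof. pose proof (pos_INR n); lra. Qed.

Lemma INR_plus_1_inj m n : INR m + 1 = INR n + 1 -> m = n.
Proof. intros H. apply INR_eq. lra. Qed.

Lemma shrinking_seq d0 : 0 < d0 ->
  (forall n, 0 <= d0 / (INR n + 2) < d0) /\
  (forall m n, d0 / (INR m + 2) = d0 / (INR n + 2) -> m = n).
Proof.
  intros Hd0. split.
  - intro n. pose proof (pos_INR n). split; [apply Rle_mult_inv_pos; lra|].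
    apply Rmult_lt_reg_r with (INR n + 2); [lra|].
    replace (d0 / (INR n + 2) * (INR n + 2)) with d0 by (field; lra). nra.
  - intros m n E. apply INR_eq. pose proof (pos_INR m). pose proof (pos_INR n).
    apply (f_equal (fun z => d0 / z)) in E.
    replace (d0 / (d0 / (INR m + 2))) with (INR m + 2) in E by (field; lra).
    replace (d0 / (d0 / (INR n + 2))) with (INR n + 2) in E by (field; lra). lra.
Qed.

Lemma infinitely_many_control_sets_al0 a b be us uS : be <> 0 -> us < 0 -> 0 < uS ->
  exists Cs : nat -> (R * R -> Prop),
    (forall n, control_set a b 0 be us uS (Cs n)) /\
    (forall m n, m <> n -> exists p, ~ (Cs m p <-> Cs n p)).
Proof.
  intros Hbe Hus HuS.
  destruct (Rtotal_order b 0) as [Hb|[Hb|Hb]].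
  - exists (fun n => equilibrium_band a b be us uS (INR n + 1)).
    split; [intro n; apply control_set_al0_b_neg; auto; apply INR_plus_1_pos|].
    apply (control_sets_distinct _ (fun n => INR n + 1)
             (fun n => snd (line_equilibrium a b be us (INR n + 1)))).
    + intro n. apply line_equilibrium_in_band; [lra|lra|apply INR_plus_1_pos].
    + intros n q [Hq _]. auto.
    + apply INR_plus_1_inj.
  - subst b. destruct (al0_b0_sign_change a be us uS Hbe Hus HuS) as [d0 [Hd0 Hsign]].
    destruct (shrinking_seq d0 Hd0) as [Hd Hinj].
    exists (fun n q => fst q = 1 + d0 / (INR n + 2)).
    split; [intro n; destruct (Hsign _ (Hd n)); apply control_set_al0_b0; auto; pose proof (Hd n); lra|].
    apply (control_sets_distinct _ (fun n => 1 + d0 / (INR n + 2)) (fun _ => 0)); auto.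
    intros m n E. apply Hinj. lra.
  - exists (fun n q => q = line_equilibrium a b be us (INR n + 1)).
    split; [intro n; apply control_set_al0_b_pos; auto; apply INR_plus_1_pos|].
    apply (control_sets_distinct _ (fun n => INR n + 1)
             (fun n => snd (line_equilibrium a b be us (INR n + 1)))).
    + intro n. auto.
    + intros n q ->. auto.
    + apply INR_plus_1_inj.
Qed.

(** * The Lie algebra rank condition *)

(* [g = (f_uS - f_0) / uS = x (al, be)] and [[f_0, g] = (0, - (a al + b be) x)], whose
   determinant at [(x, y)] is [- al (a al + b be) x^2]. *)
Lemma larc_of_nondegenerate a b al be us uS : us < 0 -> 0 < uS -> al * (a * al + b * be) <> 0 ->
  LARC a b al be us uS.
Proof.
  intros Hus HuS Hk p Hp. unfold inG in Hp.
  set (k := a * al + b * be) in *.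
  set (g := fun q : R * R => (al * fst q, be * fst q)).
  set (f0 := field a b al be 0).
  assert (Hf0 : lie_gen a b al be us uS f0) by (apply lg_gen with 0; [lra|auto]).
  assert (Hg : lie_gen a b al be us uS g).
  { apply (lg_lin a b al be us uS (field a b al be uS) f0 g (1 / uS) (-1 / uS)); auto.
    - apply lg_gen with uS; [lra|auto].
    - intros q _. unfold g, f0, field; simpl. f_equal; field; lra. }
  exists g, (fun q => (0, - k * fst q)). split; [auto|split].
  - apply (lg_br a b al be us uS f0 g); auto.
    intros q Hq. exists (0, 0), (0, k * fst q). unfold ddir, g, f0, field; simpl.
    split; [split|split; [split|f_equal; ring]].
    + eapply dlim_eq; [|apply dlim_scal, dlim_affine]. ring.
    + eapply dlim_eq; [|apply dlim_scal, dlim_affine]. ring.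
    + eapply dlim_eq; [|apply (dlim_scal (0 * al)), dlim_affine]. ring.
    + eapply dlim_eq.
      2: { apply dlim_plus; [apply dlim_plus|].
           - apply dlim_scal, dlim_minus; [apply dlim_affine|apply dlim_const].
           - apply dlim_scal, dlim_affine.
           - apply (dlim_mult (fun s => 0 * (fst q + s * (al * fst q))) (fun _ => be)).
             + apply dlim_scal, dlim_affine.
             + apply dlim_const. }
      unfold k. ring.
  - unfold g; simpl. intro H. apply Hk.
    assert (0 < fst p * fst p) by nra.
    apply Rmult_eq_reg_r with (fst p * fst p); [|lra]. fold k. lra.
Qed.

Definition tangent_to_line (a b : R) (X : R * R -> R * R) : Prop :=
  forall q, inG q -> a * (fst q - 1) + b * snd q = 0 -> a * fst (X q) + b * snd (X q) = 0.

(* [s |-> a W_1 (p + s v) + b W_2 (p + s v)] vanishes near [s = 0], since [p + s v] stays on the line. *)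
Lemma ddir_tangent a b (W : R * R -> R * R) p v dW : tangent_to_line a b W -> inG p ->
  a * (fst p - 1) + b * snd p = 0 -> a * fst v + b * snd v = 0 -> ddir W p v dW ->
  a * fst dW + b * snd dW = 0.
Proof.
  intros HW Hp Hl Hv [D1 D2]. unfold inG in Hp.
  pose proof (Rabs_pos (fst v)) as Hv0.
  set (d0 := fst p / (Rabs (fst v) + 1)).
  assert (Hd0 : 0 < d0) by (unfold d0; apply Rdiv_lt_0_compat; lra).
  apply (dlim_locally_zero (fun s => a * fst (W (fst p + s * fst v, snd p + s * snd v)) +
                                     b * snd (W (fst p + s * fst v, snd p + s * snd v))) _ d0 Hd0).
  - intros s Hs. apply HW.
    + unfold inG; simpl.
      assert (Hsv : Rabs (s * fst v) < fst p).
      { rewrite Rabs_mult.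
        assert (Rabs s * Rabs (fst v) <= Rabs s * (Rabs (fst v) + 1))
          by (apply Rmult_le_compat_l; [apply Rabs_pos|lra]).
        assert (Rabs s * (Rabs (fst v) + 1) < d0 * (Rabs (fst v) + 1))
          by (apply Rmult_lt_compat_r; lra).
        assert (d0 * (Rabs (fst v) + 1) = fst p) by (unfold d0; field; lra).
        lra. }
      apply Rabs_def2 in Hsv. lra.
    + simpl. replace (a * (fst p + s * fst v - 1) + b * (snd p + s * snd v))
        with ((a * (fst p - 1) + b * snd p) + s * (a * fst v + b * snd v)) by ring.
      rewrite Hl, Hv. ring.
  - apply dlim_plus; apply dlim_scal; auto.
Qed.

Lemma lie_gen_tangent a b al be us uS X : a * al + b * be = 0 -> lie_gen a b al be us uS X ->
  tangent_to_line a b X.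
Proof.
  intros Hk HX. induction HX as [u Z Hu HZ | X Y Z c d HX IHX HY IHY HZ | X Y Z HX IHX HY IHY HZ];
    intros p Hp Hl.
  - rewrite HZ by auto. unfold field; simpl.
    replace (a * (u * al * fst p) + b * (a * (fst p - 1) + b * snd p + u * fst p * be))
      with (u * fst p * (a * al + b * be) + b * (a * (fst p - 1) + b * snd p)) by ring.
    rewrite Hk, Hl. ring.
  - rewrite HZ by auto. simpl.
    replace (a * (c * fst (X p) + d * fst (Y p)) + b * (c * snd (X p) + d * snd (Y p)))
      with (c * (a * fst (X p) + b * snd (X p)) + d * (a * fst (Y p) + b * snd (Y p))) by ring.
    rewrite IHX, IHY by auto. ring.
  - destruct (HZ p Hp) as [dY [dX [HdY [HdX ->]]]]. simpl.
    replace (a * (fst dY - fst dX) + b * (snd dY - snd dX)) with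
      ((a * fst dY + b * snd dY) - (a * fst dX + b * snd dX)) by ring.
    rewrite (ddir_tangent a b Y p (X p) dY), (ddir_tangent a b X p (Y p) dX); auto. ring.
Qed.

Lemma not_larc_of_degenerate a b al be us uS : ~ (a = 0 /\ b = 0) -> a * al + b * be = 0 ->
  ~ LARC a b al be us uS.
Proof.
  intros hab Hk HL. destruct (HL (1, 0)) as [X [Y [HX [HY Hdet]]]]; [unfold inG; simpl; lra|].
  assert (Hp : inG (1, 0)) by (unfold inG; simpl; lra).
  assert (Hl : a * (fst (1, 0) - 1) + b * snd (1, 0) = 0) by (simpl; ring).
  pose proof (lie_gen_tangent a b al be us uS X Hk HX _ Hp Hl) as H1.
  pose proof (lie_gen_tangent a b al be us uS Y Hk HY _ Hp Hl) as H2.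
  set (x1 := fst (X (1, 0))) in *. set (x2 := snd (X (1, 0))) in *.
  set (y1 := fst (Y (1, 0))) in *. set (y2 := snd (Y (1, 0))) in *.
  assert (Ea : a * (x1 * y2 - x2 * y1) = 0).
  { replace (a * (x1 * y2 - x2 * y1)) with (y2 * (a * x1 + b * x2) - x2 * (a * y1 + b * y2)) by ring.
    rewrite H1, H2; ring. }
  assert (Eb : b * (x1 * y2 - x2 * y1) = 0).
  { replace (b * (x1 * y2 - x2 * y1)) with (x1 * (a * y1 + b * y2) - y1 * (a * x1 + b * x2)) by ring.
    rewrite H1, H2; ring. }
  apply Hdet. destruct (Req_dec a 0) as [Ha|Ha].
  - assert (b <> 0) by (intro; apply hab; auto). apply Rmult_integral in Eb as [|]; [contradiction|auto].
  - apply Rmult_integral in Ea as [|]; [contradiction|auto].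
Qed.

(** * The case [al <> 0]: the coordinates [x] and [m = al y - be x] *)

Definition m_coord (al be : R) (q : R * R) : R := al * snd q - be * fst q.

Lemma eq_of_x_m_coord al be p q : al <> 0 -> fst p = fst q -> m_coord al be p = m_coord al be q -> p = q.
Proof.
  unfold m_coord. intros Hal Hx Hm. apply injective_projections; auto.
  apply Rmult_eq_reg_l with al; auto. rewrite Hx in Hm. lra.
Qed.

Lemma flow_m_coord a b al be v p t :
  m_coord al be (flow a b al be v p t) =
  exp (b * t) * m_coord al be p + (a * al + b * be) * fst p * exp (b * t) * int_exp (v * al - b) t
  - a * al * exp (b * t) * int_exp (- b) t.
Proof.
  unfold m_coord, flow; simpl.
  pose proof (mul_int_exp (v * al - b) t) as H1.
  assert (H2 : exp (b * t) * exp ((v * al - b) * t) = exp (v * al * t)) by (rewrite <- exp_plus; f_equal; ring).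
  transitivity (exp (b * t) * (al * snd p - be * fst p)
     + (a * al + b * be) * fst p * exp (b * t) * int_exp (v * al - b) t - a * al * exp (b * t) * int_exp (- b) t
     + be * fst p * (exp (b * t) * ((v * al - b) * int_exp (v * al - b) t) + exp (b * t) - exp (v * al * t))).
  - ring.
  - rewrite H1.
    replace (exp (b * t) * (exp ((v * al - b) * t) - 1)) with (exp (b * t) * exp ((v * al - b) * t) - exp (b * t))
      by ring.
    rewrite H2. ring.
Qed.

Lemma exists_flow_to_x us uS al x0 x1 : us < 0 -> 0 < uS -> al <> 0 -> 0 < x0 -> 0 < x1 ->
  exists v tau, us <= v <= uS /\ 0 <= tau /\ x0 * exp (v * al * tau) = x1.
Proof.
  intros Hus HuS Hal H0 H1.
  set (L := ln (x1 / x0)).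
  pose proof (Rsqr_pos_lt al Hal) as Hal2. unfold Rsqr in Hal2.
  assert (Hv : exists v, us <= v <= uS /\ v * al <> 0 /\ 0 <= L / (v * al)).
  { destruct (Rle_dec 0 (L * al)); [exists uS|exists us]; (split; [lra|split; [nra|]]).
    - replace (L / (uS * al)) with ((L * al) / (uS * (al * al))) by (field; lra).
      apply Rle_mult_inv_pos; nra.
    - replace (L / (us * al)) with ((- (L * al)) / (- us * (al * al))) by (field; lra).
      apply Rle_mult_inv_pos; nra. }
  destruct Hv as [v [Hv [Hva Ht]]]. exists v, (L / (v * al)). split; [|split]; auto.
  assert (Hv0 : v <> 0) by (intro; apply Hva; subst; ring).
  replace (v * al * (L / (v * al))) with L by (field; repeat split; auto).
  unfold L. rewrite exp_ln by (apply Rdiv_lt_0_compat; auto). field. lra.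
Qed.

(** * The case [al <> 0], [a al + b be = 0]: an invariant line *)

Definition invariant_line a b al be (q : R * R) : Prop := 0 < fst q /\ b * m_coord al be q - a * al = 0.

Lemma flow_invariant_line a b al be v q t : a * al + b * be = 0 ->
  b * m_coord al be (flow a b al be v q t) - a * al = exp (b * t) * (b * m_coord al be q - a * al).
Proof.
  intros Hk. rewrite flow_m_coord, Hk.
  replace (b * (exp (b * t) * m_coord al be q + 0 * fst q * exp (b * t) * int_exp (v * al - b) t -
      a * al * exp (b * t) * int_exp (- b) t) - a * al)
    with (exp (b * t) * (b * m_coord al be q) - a * al * (b * (exp (b * t) * int_exp (- b) t)) - a * al) by ring.
  rewrite exp_mul_int_exp_opp. ring.
Qed.

Lemma invariant_line_cs_props a b al be us uS : us < 0 -> 0 < uS -> al <> 0 -> b <> 0 ->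
  a * al + b * be = 0 -> cs_props a b al be us uS (invariant_line a b al be).
Proof.
  intros Hus HuS Hal Hb Hk. split; [|split].
  - intros p [Hp _]. auto.
  - intros p [Hp1 Hp2]. exists (fun _ => 0), (flow a b al be 0 p). split; [apply admissible_const; lra|].
    split; [apply flow_is_solution|]. intros t _. split.
    + rewrite flow_x. apply Rmult_lt_0_compat; [auto|apply exp_pos].
    + rewrite flow_invariant_line, Hp2 by auto. ring.
  - intros p [Hp1 Hp2] q [Hq1 Hq2]. apply in_closure_pos_orbit.
    destruct (exists_flow_to_x us uS al (fst p) (fst q) Hus HuS Hal Hp1 Hq1) as [v [tau [Hv [Ht Hx]]]].
    replace q with (flow a b al be v p tau); [apply pos_orbit_flow; auto|].
    apply (eq_of_x_m_coord al be); auto.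
    pose proof (flow_invariant_line a b al be v p tau Hk) as H. rewrite Hp2, Rmult_0_r in H.
    apply Rmult_eq_reg_l with b; auto. lra.
Qed.

Lemma invariant_line_greatest a b al be us uS D : b <> 0 -> a * al + b * be = 0 ->
  cs_props a b al be us uS D -> forall p, D p -> invariant_line a b al be p.
Proof.
  intros Hb Hk HD p Hp. split; [apply (proj1 HD p Hp)|].
  (* both [+ (b m - a al)] and [- (b m - a al)] grow at rate [b] along every field *)
  assert (Hrate : forall v x y,
      (- (b * be)) * (v * al * x) + (b * al) * (a * (x - 1) + b * y + v * x * be)
      = b * ((- (b * be)) * x + (b * al) * y + (- (a * al)))).
  { intros v x y.
    transitivity (b * ((- (b * be)) * x + (b * al) * y + (- (a * al))) + b * x * (a * al + b * be)); [ring|].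
    rewrite Hk. ring. }
  unfold m_coord.
  destruct (Rlt_dec b 0) as [Hbn|Hbp].
  - pose proof (cs_props_aff_nonpos_decay a b al be us uS (- (b * be)) (b * al) (- (a * al)) b D Hbn
      ltac:(intros; rewrite Hrate; lra) HD p Hp).
    pose proof (cs_props_aff_nonpos_decay a b al be us uS (b * be) (- (b * al)) (a * al) b D Hbn
      ltac:(intros v x y Hv Hx; pose proof (Hrate v x y); lra) HD p Hp).
    unfold aff in *. lra.
  - pose proof (cs_props_aff_nonpos_growth a b al be us uS (- (b * be)) (b * al) (- (a * al)) b D ltac:(lra)
      ltac:(intros; rewrite Hrate; lra) HD p Hp).
    pose proof (cs_props_aff_nonpos_growth a b al be us uS (b * be) (- (b * al)) (a * al) b D ltac:(lra)
      ltac:(intros v x y Hv Hx; pose proof (Hrate v x y); lra) HD p Hp).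
    unfold aff in *. lra.
Qed.

Lemma invariant_line_empty_interior a b al be : al <> 0 -> b <> 0 ->
  ~ nonempty_interior (invariant_line a b al be).
Proof.
  intros Hal Hb [p [eps [He Hin]]].
  assert (H1 := Hin p ltac:(rewrite Rminus_diag, Rabs_R0; lra) ltac:(rewrite Rminus_diag, Rabs_R0; lra)).
  assert (H2 := Hin (fst p, snd p + eps / 2) ltac:(simpl; rewrite Rminus_diag, Rabs_R0; lra)
     ltac:(simpl; replace (snd p + eps / 2 - snd p) with (eps / 2) by ring; rewrite Rabs_pos_eq; lra)).
  destruct H1 as [_ H1]. destruct H2 as [_ H2]. unfold m_coord in *. simpl in H2.
  assert (b * al * (eps / 2) = 0) by lra.
  apply Rmult_integral in H as [H|H]; [apply Rmult_integral in H as [|]|]; lra.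
Qed.

(** * The case [al <> 0], [b = 0]: the whole group is the control set *)

Lemma flow_m_coord_b0 a al be v p t :
  m_coord al be (flow a 0 al be v p t) = m_coord al be p + a * al * (fst p * int_exp (v * al) t - t).
Proof.
  rewrite flow_m_coord. replace (v * al - 0) with (v * al) by ring. replace (- 0) with 0 by ring.
  rewrite int_exp_mu0, Rmult_0_l, exp_0. ring.
Qed.

(* Under the control [0], [x] stays put and [m] moves at speed [a al (x - 1)]: forwards
   at [x = 2] and backwards at [x = 1/2].  So: steer [x] to [2], wait, steer [x] to [1/2],
   wait, steer [x] to its target, with the two waiting times fixing [m]. *)
Lemma pos_orbit_b0 a al be us uS p q : us < 0 -> 0 < uS -> al <> 0 -> a * al <> 0 ->
  0 < fst p -> 0 < fst q -> pos_orbit a 0 al be us uS p q.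
Proof.
  intros Hus HuS Hal Hk Hp Hq.
  set (k := a * al) in *. set (mm := m_coord al be).
  destruct (exists_flow_to_x us uS al (fst p) 2 Hus HuS Hal Hp ltac:(lra)) as [v1 [t1 [Hv1 [Ht1 Hx1]]]].
  destruct (exists_flow_to_x us uS al 2 (1 / 2) Hus HuS Hal ltac:(lra) ltac:(lra))
    as [v3 [t3 [Hv3 [Ht3 Hx3]]]].
  destruct (exists_flow_to_x us uS al (1 / 2) (fst q) Hus HuS Hal ltac:(lra) Hq) as [v5 [t5 [Hv5 [Ht5 Hx5]]]].
  set (S := fst p * int_exp (v1 * al) t1 - t1 + (2 * int_exp (v3 * al) t3 - t3)
            + (1 / 2 * int_exp (v5 * al) t5 - t5)).
  set (R := (mm q - mm p) / k - S).
  set (t2 := Rmax R 0). set (t4 := -2 * Rmin R 0).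
  assert (Ht2 : 0 <= t2) by apply Rmax_r.
  assert (Ht4 : 0 <= t4) by (unfold t4; pose proof (Rmin_r R 0); lra).
  assert (HR : t2 - t4 / 2 = R) by (unfold t2, t4, Rmax, Rmin; destruct (Rle_dec R 0); lra).
  set (l := (v1, t1) :: (0, t2) :: (v3, t3) :: (0, t4) :: (v5, t5) :: nil).
  assert (Hl : values_in us uS l).
  { intros ph Hph. simpl in Hph. repeat (destruct Hph as [<-|Hph]; [simpl; lra|]). destruct Hph. }
  replace q with (concat_end a 0 al be l p); [apply pos_orbit_concat_end; auto; lra|].
  unfold l. rewrite !concat_end_cons by auto. simpl.
  set (P1 := flow a 0 al be v1 p t1).
  set (P2 := flow a 0 al be 0 P1 t2).
  set (P3 := flow a 0 al be v3 P2 t3).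
  set (P4 := flow a 0 al be 0 P3 t4).
  set (P5 := flow a 0 al be v5 P4 t5).
  assert (X1 : fst P1 = 2) by (unfold P1; rewrite flow_x; auto).
  assert (X2 : fst P2 = 2) by (unfold P2; rewrite flow_x, !Rmult_0_l, exp_0, Rmult_1_r; auto).
  assert (X3 : fst P3 = 1 / 2) by (unfold P3; rewrite flow_x, X2; auto).
  assert (X4 : fst P4 = 1 / 2) by (unfold P4; rewrite flow_x, !Rmult_0_l, exp_0, Rmult_1_r; auto).
  assert (X5 : fst P5 = fst q) by (unfold P5; rewrite flow_x, X4; auto).
  apply (eq_of_x_m_coord al be); auto.
  assert (M1 : mm P1 = mm p + k * (fst p * int_exp (v1 * al) t1 - t1)) by apply flow_m_coord_b0.
  assert (M2 : mm P2 = mm P1 + k * t2).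
  { unfold mm, P2. rewrite flow_m_coord_b0, Rmult_0_l, int_exp_mu0. fold P2. rewrite X1. unfold k. ring. }
  assert (M3 : mm P3 = mm P2 + k * (2 * int_exp (v3 * al) t3 - t3))
    by (unfold mm, P3; rewrite flow_m_coord_b0, X2; auto).
  assert (M4 : mm P4 = mm P3 - k * t4 / 2).
  { unfold mm, P4. rewrite flow_m_coord_b0, Rmult_0_l, int_exp_mu0, X3. unfold k. field. }
  assert (M5 : mm P5 = mm P4 + k * (1 / 2 * int_exp (v5 * al) t5 - t5))
    by (unfold mm, P5; rewrite flow_m_coord_b0, X4; auto).
  fold (mm P5) (mm q). rewrite M5, M4, M3, M2, M1.
  assert (E : k * (t2 - t4 / 2) = k * R) by (rewrite HR; auto).
  unfold R in E. replace (k * ((mm q - mm p) / k - S)) with (mm q - mm p - k * S) in E by (field; auto).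
  unfold S in E. lra.
Qed.

Lemma unique_control_set_b0 a al be us uS : us < 0 -> 0 < uS -> al <> 0 -> a * al <> 0 ->
  exists C, control_set a 0 al be us uS C /\
    (forall D, control_set a 0 al be us uS D -> forall p, D p <-> C p) /\
    nonempty_interior C.
Proof.
  intros Hus HuS Hal Hk.
  assert (Hcs : cs_props a 0 al be us uS inG).
  { split; [|split].
    - auto.
    - intros p Hp. exists (fun _ => 0), (flow a 0 al be 0 p). split; [apply admissible_const; lra|].
      split; [apply flow_is_solution|]. intros t _. unfold inG.
      rewrite flow_x, !Rmult_0_l, exp_0, Rmult_1_r. auto.
    - intros p Hp q Hq. apply in_closure_pos_orbit, pos_orbit_b0; auto. }
  destruct (control_set_of_greatest a 0 al be us uS inG Hcs (fun D HD => proj1 HD)) as [Hc1 Hc2].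
  exists inG. split; [auto|split; [auto|]].
  exists (1, 0), (1 / 2). split; [lra|]. intros q Hq _. unfold inG. simpl in Hq. apply Rabs_def2 in Hq. lra.
Qed.

(** * The case [al <> 0], [b <> 0], [a al + b be <> 0]: the coordinate [V] *)

(* Along [f_u], [r = (a al - b m) / (a al + b be)] satisfies [r' = b (r - x)], so [V = r / x]
   solves the scalar equation [V' = (b - lam) V - b], where [lam = u al] is the rate of [x]. *)
Definition r_coord (a b al be : R) (q : R * R) : R := (a * al - b * m_coord al be q) / (a * al + b * be).
Definition v_coord (a b al be : R) (q : R * R) : R := r_coord a b al be q / fst q.

Lemma flow_r_coord a b al be v p t : a * al + b * be <> 0 -> v * al <> b ->
  r_coord a b al be (flow a b al be v p t) =
  exp (b * t) * r_coord a b al be p + fst p * b * (exp (v * al * t) - exp (b * t)) / (b - v * al).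
Proof.
  intros Hk Hl. unfold r_coord. rewrite flow_m_coord. unfold m_coord.
  pose proof (exp_mul_int_exp_opp b t) as H1. pose proof (mul_int_exp (v * al - b) t) as H2.
  assert (H3 : exp (b * t) * exp ((v * al - b) * t) = exp (v * al * t)) by (rewrite <- exp_plus; f_equal; ring).
  assert (H4 : exp (b * t) * int_exp (v * al - b) t = (exp (v * al * t) - exp (b * t)) / (v * al - b)).
  { apply Rmult_eq_reg_l with (v * al - b); [|lra].
    replace ((v * al - b) * (exp (b * t) * int_exp (v * al - b) t))
      with (exp (b * t) * ((v * al - b) * int_exp (v * al - b) t)) by ring.
    rewrite H2. field_simplify; [|lra]. rewrite H3. ring. }
  replace (b * (exp (b * t) * (al * snd p - be * fst p) + (a * al + b * be) * fst p * exp (b * t) *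
       int_exp (v * al - b) t - a * al * exp (b * t) * int_exp (- b) t))
    with (exp (b * t) * (b * (al * snd p - be * fst p)) + (a * al + b * be) * fst p * b *
       (exp (b * t) * int_exp (v * al - b) t) - a * al * (b * (exp (b * t) * int_exp (- b) t))) by ring.
  rewrite H1, H4. field. split; lra.
Qed.

Lemma flow_v_coord a b al be v p t : a * al + b * be <> 0 -> v * al <> b -> 0 < fst p ->
  v_coord a b al be (flow a b al be v p t) =
  b / (b - v * al) + (v_coord a b al be p - b / (b - v * al)) * exp ((b - v * al) * t).
Proof.
  intros Hk Hl Hp. unfold v_coord. rewrite flow_r_coord, flow_x by auto.
  assert (E : exp ((b - v * al) * t) * exp (v * al * t) = exp (b * t)) by (rewrite <- exp_plus; f_equal; ring).
  pose proof (exp_pos (v * al * t)).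
  rewrite <- E. field. repeat split; lra.
Qed.

Lemma eq_of_x_v_coord a b al be p q : al <> 0 -> b <> 0 -> a * al + b * be <> 0 -> 0 < fst p ->
  fst p = fst q -> v_coord a b al be p = v_coord a b al be q -> p = q.
Proof.
  intros Hal Hb Hk Hp Hx HV. apply (eq_of_x_m_coord al be); auto.
  unfold v_coord, r_coord in HV. rewrite <- Hx in HV.
  apply Rmult_eq_reg_l with (- b / (a * al + b * be)).
  - replace (- b / (a * al + b * be) * m_coord al be p)
      with ((a * al - b * m_coord al be p) / (a * al + b * be) / fst p * fst p - a * al / (a * al + b * be))
      by (field; split; lra).
    rewrite HV. field. split; lra.
  - intro H. apply Hb. apply Rmult_eq_reg_r with (/ (a * al + b * be)); [|apply Rinv_neq_0_compat; auto].
    unfold Rdiv in H. lra.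
Qed.

Definition v_velocity (b lam V : R) : R := (b - lam) * V - b.

(* [V] moves monotonically from [V0] to [V1] under the rate [lam]. *)
Definition monotone_path (b lam V0 V1 : R) : Prop :=
  V1 = V0 \/ (0 < v_velocity b lam V0 * (V1 - V0) /\ 0 < v_velocity b lam V1 * (V1 - V0)).

Definition travel_time (b lam V0 V1 : R) : R :=
  if Req_EM_T V1 V0 then 0 else ln ((V1 - b / (b - lam)) / (V0 - b / (b - lam))) / (b - lam).

Lemma travel_time_spec b lam V0 V1 : lam <> b -> monotone_path b lam V0 V1 ->
  0 <= travel_time b lam V0 V1 /\
  b / (b - lam) + (V0 - b / (b - lam)) * exp ((b - lam) * travel_time b lam V0 V1) = V1.
Proof.
  intros Hl H. unfold travel_time. destruct (Req_EM_T V1 V0) as [E|Ne].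
  { split; [lra|]. rewrite Rmult_0_r, exp_0. subst; ring. }
  destruct H as [H|[H1 H2]]; [contradiction|].
  set (mu := b - lam) in *. assert (Hmu : mu <> 0) by (unfold mu; lra).
  set (Vs := b / mu).
  assert (Ef : forall V, v_velocity b lam V = mu * (V - Vs))
    by (intro V; unfold v_velocity, Vs; fold mu; field; auto).
  rewrite Ef in H1, H2.
  assert (Hw0 : V0 - Vs <> 0) by (intro Hz; rewrite Hz in H1; lra).
  assert (Hd : mu * (V1 - V0) <> 0) by (apply Rmult_integral_contrapositive; split; lra).
  set (r := (V1 - Vs) / (V0 - Vs)).
  (* [V0 - Vs] and [V1 - Vs] have the sign of [mu (V1 - V0)] *)
  assert (Hr : 0 < r).
  { unfold r. replace ((V1 - Vs) / (V0 - Vs)) with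
      (((mu * (V0 - Vs) * (V1 - V0)) * (mu * (V1 - Vs) * (V1 - V0))) /
       ((mu * (V1 - V0)) * (mu * (V1 - V0)) * ((V0 - Vs) * (V0 - Vs)))) by (field; split; lra).
    apply Rdiv_lt_0_compat; [apply Rmult_lt_0_compat; auto|].
    apply Rmult_lt_0_compat; apply Rsqr_pos_lt; auto. }
  assert (Hsign : 0 < (r - 1) * mu).
  { replace ((r - 1) * mu) with ((mu * (V0 - Vs) * (V1 - V0)) / ((V0 - Vs) * (V0 - Vs)))
      by (unfold r; field; auto).
    apply Rdiv_lt_0_compat; auto. apply Rsqr_pos_lt; auto. }
  fold r. split.
  - destruct (Rlt_dec 0 mu).
    + assert (1 < r) by nra. assert (0 < ln r) by (rewrite <- ln_1; apply ln_increasing; lra).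
      left. apply Rdiv_lt_0_compat; auto.
    + assert (r < 1) by nra. assert (ln r < 0) by (rewrite <- ln_1; apply ln_increasing; lra).
      left. replace (ln r / mu) with ((- ln r) / (- mu)) by (field; auto). apply Rdiv_lt_0_compat; lra.
  - replace (mu * (ln r / mu)) with (ln r) by (field; auto). rewrite exp_ln by auto.
    unfold r. field. auto.
Qed.

Definition equilibrium_rate (b V : R) : R := b - b / V.

Lemma v_velocity_equilibrium_rate b lam V : V <> 0 ->
  v_velocity b lam V = V * (equilibrium_rate b V - lam).
Proof. intros. unfold v_velocity, equilibrium_rate. field. auto. Qed.

Lemma equilibrium_of_rate b lam : 0 < b * (b - lam) ->
  0 < b / (b - lam) /\ equilibrium_rate b (b / (b - lam)) = lam /\ lam <> b.
Proof.
  intros H. assert (Hb : b <> 0) by (intro; subst; lra).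
  assert (Hl : b - lam <> 0) by (intro E; rewrite E in H; lra).
  split; [|split; [unfold equilibrium_rate; field; auto|lra]].
  replace (b / (b - lam)) with (b * b / (b * (b - lam))) by (field; auto).
  apply Rdiv_lt_0_compat; auto. apply Rsqr_pos_lt; auto.
Qed.

Lemma rate_control us uS al lam : us < uS -> al <> 0 ->
  rate_min us uS al <= lam <= rate_max us uS al -> us <= lam / al <= uS.
Proof.
  unfold rate_min, rate_max. intros Hu Hal H.
  destruct (Rlt_dec 0 al).
  - rewrite Rmin_left, Rmax_right in H by nra.
    split; apply Rmult_le_reg_r with al; auto; replace (lam / al * al) with lam by (field; auto); lra.
  - assert (al < 0) by lra. rewrite Rmin_right, Rmax_left in H by nra.
    split; apply Rmult_le_reg_r with (- al); try lra;
      replace (lam / al * (- al)) with (- lam) by (field; auto); nra.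
Qed.

Lemma pick_neq (x y b : R) : x <> y -> exists z, (z = x \/ z = y) /\ z <> b.
Proof.
  intros H. destruct (Req_dec x b); [exists y|exists x]; split; auto. intro; apply H; lra.
Qed.

(* To move [V0] to [V1] one needs a rate beyond both equilibrium rates, in the direction of
   the motion; [equilibrium_rate b] is monotone, so this is possible when [V1] is an interior
   equilibrium and [V0] an equilibrium (an interior one unless [b < 0]). *)
Lemma steer_rate b lm lp V0 V1 : b <> 0 -> lm < 0 < lp -> 0 < V0 -> 0 < V1 ->
  lm < equilibrium_rate b V1 < lp ->
  ((b < 0 /\ lm <= equilibrium_rate b V0 <= lp) \/ (lm < equilibrium_rate b V0 < lp)) ->
  exists lam, lm <= lam <= lp /\ lam <> b /\ monotone_path b lam V0 V1.
Proof.
  intros Hb Hl H0 H1 HV1 HV0. unfold monotone_path.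
  set (e0 := equilibrium_rate b V0) in *. set (e1 := equilibrium_rate b V1) in *.
  assert (Mono : e0 - e1 = b * (V0 - V1) / (V0 * V1)) by (unfold e0, e1, equilibrium_rate; field; lra).
  destruct (Rtotal_order V0 V1) as [Hlt|[Heq|Hgt]].
  - assert (Hlm0 : lm < e0).
    { destruct HV0 as [[Hbn _]|[? _]]; auto.
      assert (0 < b * (V0 - V1) / (V0 * V1)) by (apply Rdiv_lt_0_compat; nra). lra. }
    assert (Hlm : lm < Rmin e0 e1) by (apply Rmin_glb_lt; lra).
    pose proof (Rmin_l e0 e1). pose proof (Rmin_r e0 e1).
    destruct (pick_neq lm ((lm + Rmin e0 e1) / 2) b ltac:(lra)) as [lam [Hlam Hne]].
    exists lam. split; [destruct Hlam; lra|]. split; auto. right.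
    unfold e0, e1 in *. rewrite !v_velocity_equilibrium_rate by lra.
    split; apply Rmult_lt_0_compat; try lra; apply Rmult_lt_0_compat; destruct Hlam; lra.
  - exists (if Req_EM_T lp b then lm else lp).
    split; [destruct (Req_EM_T lp b); lra|]. split; [destruct (Req_EM_T lp b); lra|]. left; auto.
  - assert (Hlp0 : e0 < lp).
    { destruct HV0 as [[Hbn _]|[_ ?]]; auto.
      assert (0 < - (b * (V0 - V1)) / (V0 * V1)) by (apply Rdiv_lt_0_compat; nra).
      assert (b * (V0 - V1) / (V0 * V1) = - (- (b * (V0 - V1)) / (V0 * V1))) by (field; lra). lra. }
    assert (Hlp : Rmax e0 e1 < lp) by (apply Rmax_lub_lt; lra).
    pose proof (Rmax_l e0 e1). pose proof (Rmax_r e0 e1).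
    destruct (pick_neq lp ((Rmax e0 e1 + lp) / 2) b ltac:(lra)) as [lam [Hlam Hne]].
    exists lam. split; [destruct Hlam; lra|]. split; auto. right.
    unfold e0, e1 in *. rewrite !v_velocity_equilibrium_rate by lra.
    split; [replace (V0 * (equilibrium_rate b V0 - lam) * (V1 - V0))
              with (V0 * ((lam - equilibrium_rate b V0) * (V0 - V1))) by ring
           |replace (V1 * (equilibrium_rate b V1 - lam) * (V1 - V0))
              with (V1 * ((lam - equilibrium_rate b V1) * (V0 - V1))) by ring];
      apply Rmult_lt_0_compat; try lra; apply Rmult_lt_0_compat; destruct Hlam; lra.
Qed.

Lemma v_coord_steer a b al be us uS V0 V1 : us < 0 -> 0 < uS -> al <> 0 -> b <> 0 ->
  a * al + b * be <> 0 -> 0 < V0 -> 0 < V1 ->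
  rate_min us uS al < equilibrium_rate b V1 < rate_max us uS al ->
  ((b < 0 /\ rate_min us uS al <= equilibrium_rate b V0 <= rate_max us uS al) \/
   (rate_min us uS al < equilibrium_rate b V0 < rate_max us uS al)) ->
  exists lam tau, us <= lam / al <= uS /\ 0 <= tau /\
    forall P, 0 < fst P -> v_coord a b al be P = V0 ->
      v_coord a b al be (flow a b al be (lam / al) P tau) = V1 /\
      fst (flow a b al be (lam / al) P tau) = fst P * exp (lam * tau).
Proof.
  intros Hus HuS Hal Hb Hk H0 H1 HV1 HV0.
  pose proof (rate_min_neg_max_pos us uS al Hus HuS Hal) as Hl.
  destruct (steer_rate b _ _ V0 V1 Hb Hl H0 H1 HV1 HV0) as [lam [Hlam [Hne Hc]]].
  destruct (travel_time_spec b lam V0 V1 Hne Hc) as [Ht HV].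
  assert (Hva : lam / al * al = lam) by (field; auto).
  exists lam, (travel_time b lam V0 V1). split; [apply rate_control; auto; lra|]. split; auto.
  intros P HP HP0. split.
  - rewrite flow_v_coord, Hva, HP0; auto. rewrite Hva; auto.
  - rewrite flow_x, Hva. auto.
Qed.

Lemma flow_v_coord_equilibrium a b al be lam P t : al <> 0 -> a * al + b * be <> 0 ->
  lam <> b -> 0 < fst P -> v_coord a b al be P = b / (b - lam) ->
  v_coord a b al be (flow a b al be (lam / al) P t) = v_coord a b al be P /\
  fst (flow a b al be (lam / al) P t) = fst P * exp (lam * t).
Proof.
  intros Hal Hk Hne HP HV.
  assert (Hva : lam / al * al = lam) by (field; auto).
  split.
  - rewrite flow_v_coord, Hva, HV; [ring|auto|rewrite Hva; auto|auto].
  - rewrite flow_x, Hva. auto.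
Qed.

(* Rates at which [x] grows resp. decays while [V] sits at a positive equilibrium. *)
Lemma hold_rates_exist b lm lp : b <> 0 -> lm < 0 < lp ->
  exists la lb, lm < lb < 0 /\ 0 < la < lp /\ 0 < b * (b - la) /\ 0 < b * (b - lb).
Proof.
  intros Hb Hl. assert (Hab : 0 < Rabs b) by (apply Rabs_pos_lt; auto).
  exists (Rmin lp (Rabs b) / 2), (Rmax lm (- Rabs b) / 2).
  pose proof (Rmin_l lp (Rabs b)). pose proof (Rmin_r lp (Rabs b)).
  pose proof (Rmax_l lm (- Rabs b)). pose proof (Rmax_r lm (- Rabs b)).
  assert (0 < Rmin lp (Rabs b)) by (apply Rmin_pos; lra).
  assert (Rmax lm (- Rabs b) < 0) by (apply Rmax_lub_lt; lra).
  destruct (Rlt_dec 0 b); [rewrite Rabs_pos_eq in * by lra|rewrite Rabs_left in * by lra];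
    repeat split; nra.
Qed.

Lemma split_log la lb L : lb < 0 < la -> exists t2 t4, 0 <= t2 /\ 0 <= t4 /\ la * t2 + lb * t4 = L.
Proof.
  intros Hl. exists (Rmax L 0 / la), (Rmin L 0 / lb).
  split; [apply Rle_mult_inv_pos; [apply Rmax_r|lra]|split].
  - replace (Rmin L 0 / lb) with ((- Rmin L 0) / (- lb)) by (field; lra).
    apply Rle_mult_inv_pos; [pose proof (Rmin_r L 0); lra|lra].
  - replace (la * (Rmax L 0 / la) + lb * (Rmin L 0 / lb)) with (Rmax L 0 + Rmin L 0) by (field; lra).
    unfold Rmax, Rmin. destruct (Rle_dec L 0); lra.
Qed.

(* The points whose [V] is an equilibrium for some admissible rate; for [b > 0] the two extreme
   equilibria are excluded. *)
Definition region a b al be us uS (q : R * R) : Prop :=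
  0 < fst q /\
  (b < 0 -> v_velocity b (rate_max us uS al) (v_coord a b al be q) <= 0 /\
            0 <= v_velocity b (rate_min us uS al) (v_coord a b al be q)) /\
  (0 < b -> v_velocity b (rate_max us uS al) (v_coord a b al be q) < 0 /\
            0 < v_velocity b (rate_min us uS al) (v_coord a b al be q)).

Definition region_int a b al be us uS (q : R * R) : Prop :=
  0 < fst q /\ v_velocity b (rate_max us uS al) (v_coord a b al be q) < 0 /\
  0 < v_velocity b (rate_min us uS al) (v_coord a b al be q).

Lemma region_int_sub a b al be us uS q : region_int a b al be us uS q -> region a b al be us uS q.
Proof. intros [H1 [H2 H3]]. split; auto. split; intros; split; lra. Qed.

Lemma pos_of_velocity_signs b lm lp V : b <> 0 -> lm < lp ->
  v_velocity b lp V <= 0 -> 0 <= v_velocity b lm V -> 0 < V.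
Proof.
  intros Hb Hl H1 H2. unfold v_velocity in *. destruct (Rlt_dec 0 V) as [|Hn]; auto. exfalso.
  assert ((lp - lm) * V <= 0) by nra.
  assert (V = 0) by nra. subst. lra.
Qed.

Lemma region_rate a b al be us uS q : b <> 0 -> us < 0 -> 0 < uS -> al <> 0 ->
  region a b al be us uS q -> 0 < v_coord a b al be q /\
  ((b < 0 /\ rate_min us uS al <= equilibrium_rate b (v_coord a b al be q) <= rate_max us uS al) \/
   (rate_min us uS al < equilibrium_rate b (v_coord a b al be q) < rate_max us uS al)).
Proof.
  intros Hb Hus HuS Hal [Hx [Hn Hp]].
  pose proof (rate_min_neg_max_pos us uS al Hus HuS Hal) as Hl.
  set (V := v_coord a b al be q) in *.
  destruct (Rlt_dec b 0) as [Hb'|Hb'].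
  - destruct (Hn Hb') as [H1 H2].
    assert (HV : 0 < V) by (apply (pos_of_velocity_signs b (rate_min us uS al) (rate_max us uS al));
                                  auto; lra).
    split; auto. left. split; auto. rewrite v_velocity_equilibrium_rate in H1, H2 by lra. split; nra.
  - destruct (Hp ltac:(lra)) as [H1 H2].
    assert (HV : 0 < V) by (apply (pos_of_velocity_signs b (rate_min us uS al) (rate_max us uS al));
                                  auto; lra).
    split; auto. right. rewrite v_velocity_equilibrium_rate in H1, H2 by lra. split; nra.
Qed.

Lemma region_int_rate a b al be us uS q : b <> 0 -> us < 0 -> 0 < uS -> al <> 0 ->
  region_int a b al be us uS q -> 0 < v_coord a b al be q /\
  rate_min us uS al < equilibrium_rate b (v_coord a b al be q) < rate_max us uS al.
Proof.
  intros Hb Hus HuS Hal [Hx [H1 H2]].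
  pose proof (rate_min_neg_max_pos us uS al Hus HuS Hal) as Hl.
  set (V := v_coord a b al be q) in *.
  assert (HV : 0 < V) by (apply (pos_of_velocity_signs b (rate_min us uS al) (rate_max us uS al));
                                  auto; lra).
  split; auto. rewrite v_velocity_equilibrium_rate in H1, H2 by lra. split; nra.
Qed.

(* Steer [V] to an equilibrium where [x] grows, hold, steer [V] to one where [x] decays,
   hold, and steer [V] to its target; the two holding times adjust [x]. *)
Lemma pos_orbit_region a b al be us uS p q : us < 0 -> 0 < uS -> al <> 0 -> b <> 0 ->
  a * al + b * be <> 0 ->
  region a b al be us uS p -> region_int a b al be us uS q -> pos_orbit a b al be us uS p q.
Proof.
  intros Hus HuS Hal Hb Hk Hp Hq.
  pose proof (rate_min_neg_max_pos us uS al Hus HuS Hal) as Hl.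
  set (lm := rate_min us uS al) in *. set (lp := rate_max us uS al) in *.
  destruct (region_rate a b al be us uS p Hb Hus HuS Hal Hp) as [HVp HVp'].
  destruct (region_int_rate a b al be us uS q Hb Hus HuS Hal Hq) as [HVq HVq'].
  assert (Hxp : 0 < fst p) by apply Hp. assert (Hxq : 0 < fst q) by apply Hq.
  destruct (hold_rates_exist b lm lp Hb Hl) as [la [lb [Hlb [Hla [Hba Hbb]]]]].
  destruct (equilibrium_of_rate b la Hba) as [HVa [ea Hla_ne]].
  destruct (equilibrium_of_rate b lb Hbb) as [HVb [eb Hlb_ne]].
  set (Va := b / (b - la)) in *. set (Vb := b / (b - lb)) in *.
  destruct (v_coord_steer a b al be us uS (v_coord a b al be p) Va Hus HuS Hal Hb Hk HVp HVa
              ltac:(rewrite ea; fold lm lp; lra) HVp') as [l1 [t1 [Hv1 [Ht1 S1]]]].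
  destruct (v_coord_steer a b al be us uS Va Vb Hus HuS Hal Hb Hk HVa HVb
              ltac:(rewrite eb; fold lm lp; lra) ltac:(right; rewrite ea; fold lm lp; lra))
    as [l3 [t3 [Hv3 [Ht3 S3]]]].
  destruct (v_coord_steer a b al be us uS Vb (v_coord a b al be q) Hus HuS Hal Hb Hk HVb HVq
              HVq' ltac:(right; rewrite eb; fold lm lp; lra)) as [l5 [t5 [Hv5 [Ht5 S5]]]].
  destruct (split_log la lb (ln (fst q / fst p) - (l1 * t1 + l3 * t3 + l5 * t5)) ltac:(lra))
    as [t2 [t4 [Ht2 [Ht4 HL]]]].
  assert (Hv2 : us <= la / al <= uS) by (apply rate_control; [lra|auto|fold lm lp; lra]).
  assert (Hv4 : us <= lb / al <= uS) by (apply rate_control; [lra|auto|fold lm lp; lra]).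
  set (l := (l1 / al, t1) :: (la / al, t2) :: (l3 / al, t3) :: (lb / al, t4) :: (l5 / al, t5) :: nil).
  assert (Hlist : values_in us uS l).
  { intros ph Hph. simpl in Hph. repeat (destruct Hph as [<-|Hph]; [simpl; auto|]). destruct Hph. }
  replace q with (concat_end a b al be l p); [apply pos_orbit_concat_end; auto; lra|].
  unfold l. rewrite !concat_end_cons by auto. simpl.
  set (P1 := flow a b al be (l1 / al) p t1).
  destruct (S1 p Hxp eq_refl) as [V1e X1e]. fold P1 in V1e, X1e.
  assert (HP1 : 0 < fst P1) by (rewrite X1e; apply Rmult_lt_0_compat; [lra|apply exp_pos]).
  set (P2 := flow a b al be (la / al) P1 t2).
  destruct (flow_v_coord_equilibrium a b al be la P1 t2 Hal Hk Hla_ne HP1 V1e) as [V2e X2e].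
  fold P2 in V2e, X2e. rewrite V1e in V2e.
  assert (HP2 : 0 < fst P2) by (rewrite X2e; apply Rmult_lt_0_compat; [lra|apply exp_pos]).
  set (P3 := flow a b al be (l3 / al) P2 t3).
  destruct (S3 P2 HP2 V2e) as [V3e X3e]. fold P3 in V3e, X3e.
  assert (HP3 : 0 < fst P3) by (rewrite X3e; apply Rmult_lt_0_compat; [lra|apply exp_pos]).
  set (P4 := flow a b al be (lb / al) P3 t4).
  destruct (flow_v_coord_equilibrium a b al be lb P3 t4 Hal Hk Hlb_ne HP3 V3e) as [V4e X4e].
  fold P4 in V4e, X4e. rewrite V3e in V4e.
  assert (HP4 : 0 < fst P4) by (rewrite X4e; apply Rmult_lt_0_compat; [lra|apply exp_pos]).
  destruct (S5 P4 HP4 V4e) as [V5e X5e].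
  apply (eq_of_x_v_coord a b al be); auto.
  - rewrite X5e. apply Rmult_lt_0_compat; [lra|apply exp_pos].
  - rewrite X5e, X4e, X3e, X2e, X1e, !Rmult_assoc, <- !exp_plus.
    replace (l1 * t1 + (la * t2 + (l3 * t3 + (lb * t4 + l5 * t5)))) with (ln (fst q / fst p)) by lra.
    rewrite exp_ln by (apply Rdiv_lt_0_compat; auto). field. lra.
Qed.

(* [velocity_aff lam q = (b - lam) r - b x = x * v_velocity b lam V], an affine function of [q]. *)
Definition velocity_aff a b al be lam : R * R -> R :=
  aff ((b - lam) * b * be / (a * al + b * be) - b) (- ((b - lam) * b * al / (a * al + b * be)))
      ((b - lam) * (a * al) / (a * al + b * be)).

Lemma velocity_aff_eq a b al be lam q : a * al + b * be <> 0 -> fst q <> 0 ->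
  velocity_aff a b al be lam q = fst q * v_velocity b lam (v_coord a b al be q).
Proof. intros. unfold velocity_aff, aff, v_velocity, v_coord, r_coord, m_coord. field. auto. Qed.

Lemma velocity_aff_r_coord a b al be lam q : a * al + b * be <> 0 ->
  velocity_aff a b al be lam q = (b - lam) * r_coord a b al be q - b * fst q.
Proof. intros. unfold velocity_aff, aff, r_coord, m_coord. field. auto. Qed.

Lemma velocity_aff_rate a b al be lam v x y : a * al + b * be <> 0 ->
  ((b - lam) * b * be / (a * al + b * be) - b) * (v * al * x)
  + (- ((b - lam) * b * al / (a * al + b * be))) * (a * (x - 1) + b * y + v * x * be) =
  b * (((b - lam) * b * be / (a * al + b * be) - b) * x + (- ((b - lam) * b * al / (a * al + b * be))) * y
       + (b - lam) * (a * al) / (a * al + b * be))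
  + b * x * (lam - v * al).
Proof. intros. field. auto. Qed.

Lemma r_coord_rate a b al be v x y : a * al + b * be <> 0 ->
  (b * be / (a * al + b * be)) * (v * al * x) + (- (b * al / (a * al + b * be))) * (a * (x - 1) + b * y + v * x * be) =
  b * ((b * be / (a * al + b * be)) * x + (- (b * al / (a * al + b * be))) * y + (a * al) / (a * al + b * be) - x).
Proof. intros. field. auto. Qed.

Lemma velocity_aff_split a b al be lam x y : a * al + b * be <> 0 ->
  ((b - lam) * b * be / (a * al + b * be) - b) * x + (- ((b - lam) * b * al / (a * al + b * be))) * y
  + (b - lam) * (a * al) / (a * al + b * be) =
  (b - lam) * ((b * be / (a * al + b * be)) * x + (- (b * al / (a * al + b * be))) * y
               + (a * al) / (a * al + b * be)) - b * x.
Proof. intros. field. auto. Qed.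

Definition point_of_x_v a b al be (x V : R) : R * R :=
  (x, ((a * al - (a * al + b * be) * (V * x)) / b + be * x) / al).

Lemma v_coord_point a b al be x V : al <> 0 -> b <> 0 -> a * al + b * be <> 0 -> x <> 0 ->
  v_coord a b al be (point_of_x_v a b al be x V) = V.
Proof. intros. unfold v_coord, r_coord, m_coord, point_of_x_v; simpl. field. repeat split; auto. Qed.

Lemma region_of_velocity_aff a b al be us uS q : b <> 0 -> a * al + b * be <> 0 -> 0 < fst q ->
  ((b < 0 /\ velocity_aff a b al be (rate_max us uS al) q <= 0 /\ 0 <= velocity_aff a b al be (rate_min us uS al) q) \/
   (velocity_aff a b al be (rate_max us uS al) q < 0 /\ 0 < velocity_aff a b al be (rate_min us uS al) q)) ->
  region a b al be us uS q.
Proof.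
  intros Hb Hk Hx H. rewrite !velocity_aff_eq in H by (auto; lra).
  split; auto. split; intros Hs; destruct H as [[H0 [H1 H2]]|[H1 H2]]; split; nra.
Qed.

Lemma point_of_x_v_snd_sub a b al be x V W : al <> 0 -> b <> 0 ->
  snd (point_of_x_v a b al be x W) - snd (point_of_x_v a b al be x V) =
  - (W - V) * ((a * al + b * be) * x / (b * al)).
Proof. intros. unfold point_of_x_v; simpl. field. split; auto. Qed.

(* Moving [V] a little towards the interior equilibrium [1] leads into [region_int]. *)
Lemma region_int_dense a b al be us uS q eps : us < 0 -> 0 < uS -> al <> 0 -> b <> 0 ->
  a * al + b * be <> 0 -> region a b al be us uS q -> 0 < eps ->
  exists q', region_int a b al be us uS q' /\ Rabs (fst q' - fst q) < eps /\ Rabs (snd q' - snd q) < eps.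
Proof.
  intros Hus HuS Hal Hb Hk Hq He.
  pose proof (rate_min_neg_max_pos us uS al Hus HuS Hal) as Hl.
  set (lm := rate_min us uS al) in *. set (lp := rate_max us uS al) in *.
  assert (Hx : 0 < fst q) by apply Hq.
  set (V := v_coord a b al be q) in *.
  assert (Hw : v_velocity b lp V <= 0 /\ 0 <= v_velocity b lm V).
  { destruct Hq as [_ [H1 H2]]. fold lm lp V in H1, H2. destruct (Rlt_dec b 0); [apply H1; auto|].
    destruct (H2 ltac:(lra)); split; lra. }
  set (c := (a * al + b * be) * fst q * (1 - V) / (b * al)).
  set (K := Rabs c + 1).
  assert (HK : 1 <= K) by (unfold K; pose proof (Rabs_pos c); lra).
  set (s := Rmin (1 / 2) (eps / (2 * K))).
  assert (Hs : 0 < s) by (unfold s; apply Rmin_pos; [lra|apply Rdiv_lt_0_compat; lra]).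
  assert (Hs1 : s <= 1 / 2) by apply Rmin_l.
  assert (Hs2 : s <= eps / (2 * K)) by apply Rmin_r.
  set (W := (1 - s) * V + s).
  exists (point_of_x_v a b al be (fst q) W).
  assert (HW : v_coord a b al be (point_of_x_v a b al be (fst q) W) = W) by (apply v_coord_point; auto; lra).
  split; [split; [|split]|split].
  - simpl; auto.
  - rewrite HW. fold lp lm. unfold W, v_velocity in *.
    replace ((b - lp) * ((1 - s) * V + s) - b) with ((1 - s) * ((b - lp) * V - b) + s * (- lp)) by ring. nra.
  - rewrite HW. fold lp lm. unfold W, v_velocity in *.
    replace ((b - lm) * ((1 - s) * V + s) - b) with ((1 - s) * ((b - lm) * V - b) + s * (- lm)) by ring. nra.
  - simpl. rewrite Rminus_diag, Rabs_R0; auto.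
  - assert (Eq : q = point_of_x_v a b al be (fst q) V).
    { apply (eq_of_x_v_coord a b al be); auto. rewrite v_coord_point; auto; lra. }
    rewrite Eq at 2. rewrite point_of_x_v_snd_sub by auto.
    replace (- (W - V) * ((a * al + b * be) * fst q / (b * al))) with (- (s * c))
      by (unfold W, c; field; split; auto).
    rewrite Rabs_Ropp, Rabs_mult, (Rabs_pos_eq s) by lra.
    assert (s * Rabs c <= s * K) by (apply Rmult_le_compat_l; unfold K; lra).
    assert (s * K <= eps / (2 * K) * K) by (apply Rmult_le_compat_r; lra).
    assert (eps / (2 * K) * K = eps / 2) by (field; lra). lra.
Qed.

Lemma region_cs_props a b al be us uS : us < 0 -> 0 < uS -> al <> 0 -> b <> 0 -> a * al + b * be <> 0 ->
  cs_props a b al be us uS (region a b al be us uS).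
Proof.
  intros Hus HuS Hal Hb Hk. split; [|split].
  - intros p Hp. apply Hp.
  - (* hold [V] at its equilibrium *)
    intros p Hp. destruct (region_rate a b al be us uS p Hb Hus HuS Hal Hp) as [HV HV'].
    set (lam := equilibrium_rate b (v_coord a b al be p)).
    assert (Hlam : rate_min us uS al <= lam <= rate_max us uS al) by (unfold lam; destruct HV'; lra).
    assert (Heq : v_coord a b al be p = b / (b - lam)) by (unfold lam, equilibrium_rate; field; split; lra).
    assert (Hne : lam <> b) by (intro E; rewrite E, Rminus_diag in Heq; unfold Rdiv in Heq;
                                rewrite Rinv_0, Rmult_0_r in Heq; lra).
    assert (Hx : 0 < fst p) by apply Hp.
    exists (fun _ => lam / al), (flow a b al be (lam / al) p).
    split; [apply admissible_const, rate_control; auto; lra|].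
    split; [apply flow_is_solution|]. intros t _.
    destruct (flow_v_coord_equilibrium a b al be lam p t Hal Hk Hne Hx Heq) as [HVt Hxt].
    destruct Hp as [_ [H1 H2]].
    split; [rewrite Hxt; apply Rmult_lt_0_compat; [lra|apply exp_pos]|].
    rewrite HVt. split; auto.
  - intros p Hp q Hq eps He.
    destruct (region_int_dense a b al be us uS q eps Hus HuS Hal Hb Hk Hq He) as [q' [Hq' [H1 H2]]].
    exists q'. split; auto. apply pos_orbit_region; auto.
Qed.

Section VelocityBounds.

Variables (a b al be us uS : R) (D : R * R -> Prop).
Hypotheses (Hus : us < 0) (HuS : 0 < uS) (Hal : al <> 0) (Hk : a * al + b * be <> 0)
  (HD : cs_props a b al be us uS D).

Let k := a * al + b * be.
Let lm := rate_min us uS al.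
Let lp := rate_max us uS al.

Lemma cs_props_velocity_aff_b_neg d : b < 0 -> D d ->
  velocity_aff a b al be lp d <= 0 /\ 0 <= velocity_aff a b al be lm d.
Proof.
  intros Hbn Hd. split.
  - apply (cs_props_aff_nonpos_decay a b al be us uS _ _ _ b D Hbn); auto.
    intros v x y Hv Hx. rewrite velocity_aff_rate by auto. pose proof (rate_bounds us uS al v Hv) as Hr. fold lm lp in Hr.
    assert (0 <= x * (lp - v * al)) by nra. nra.
  - assert (H : aff (- ((b - lm) * b * be / k - b)) ((b - lm) * b * al / k) (- ((b - lm) * (a * al) / k)) d <= 0).
    { apply (cs_props_aff_nonpos_decay a b al be us uS _ _ _ b D Hbn); auto.
      intros v x y Hv Hx. pose proof (velocity_aff_rate a b al be lm v x y Hk) as E.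
      pose proof (rate_bounds us uS al v Hv) as Hr. fold lm lp in Hr.
      assert (x * (lm - v * al) <= 0) by nra.
      replace ((b - lm) * b * al / k) with (- - ((b - lm) * b * al / k)) by ring.
      unfold k in *. nra. }
    unfold velocity_aff, aff, k in *. lra.
Qed.

(* For [b > 0] the interior bounds come from [cs_props_aff_pos_strict], with [r] (resp. [- r])
   increasing at a rate proportional to [x] where [velocity_aff lm <= 0] (resp. [lp >= 0]). *)
Lemma cs_props_velocity_aff_min_pos d : 0 < b -> D d -> 0 < velocity_aff a b al be lm d.
Proof.
  intros Hbp Hd. pose proof (rate_min_neg_max_pos us uS al Hus HuS Hal) as Hl. fold lm lp in Hl.
  apply (cs_props_aff_pos_strict a b al be us uS (- (b * be / k)) (b * al / k) (- ((a * al) / k))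
           _ _ _ (- b * lm / (b - lm)) b D); auto.
  - apply Rdiv_lt_0_compat; nra.
  - intros v x y Hv Hx. pose proof (velocity_aff_rate a b al be lm v x y Hk) as E.
    pose proof (rate_bounds us uS al v Hv) as Hr. fold lm lp in Hr. assert (x * (lm - v * al) <= 0) by nra.
    unfold k in *. nra.
  - intros v x y Hv Hx Hq. rewrite velocity_aff_split in Hq by auto.
    pose proof (r_coord_rate a b al be v x y Hk) as E. unfold k in *.
    set (rv := b * be / (a * al + b * be) * x + - (b * al / (a * al + b * be)) * y + a * al / (a * al + b * be)) in *.
    replace (- (b * be / (a * al + b * be)) * (v * al * x) + b * al / (a * al + b * be) * (a * (x - 1) + b * y + v * x * be))
      with (- ((b * be / (a * al + b * be)) * (v * al * x) + - (b * al / (a * al + b * be)) * (a * (x - 1) + b * y + v * x * be)))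
      by ring.
    rewrite E. apply Rmult_le_reg_r with (b - lm); [lra|].
    replace (- b * lm / (b - lm) * x * (b - lm)) with (- b * lm * x) by (field; lra).
    replace (- (b * (rv - x)) * (b - lm)) with (- b * ((b - lm) * rv - b * x) - b * lm * x) by ring.
    nra.
Qed.

Lemma cs_props_velocity_aff_max_neg d : 0 < b -> D d -> velocity_aff a b al be lp d < 0.
Proof.
  intros Hbp Hd. pose proof (rate_min_neg_max_pos us uS al Hus HuS Hal) as Hl. fold lm lp in Hl.
  pose proof (cs_props_velocity_aff_min_pos d Hbp Hd) as Hmin.
  destruct (Rlt_dec lp b) as [Hlpb|Hlpb].
  - assert (H : 0 < aff (- ((b - lp) * b * be / k - b)) ((b - lp) * b * al / k) (- ((b - lp) * (a * al) / k)) d).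
    { apply (cs_props_aff_pos_strict a b al be us uS (b * be / k) (- (b * al / k)) ((a * al) / k)
               _ _ _ (b * lp / (b - lp)) b D); auto.
      - apply Rdiv_lt_0_compat; nra.
      - intros v x y Hv Hx. pose proof (velocity_aff_rate a b al be lp v x y Hk) as E.
        pose proof (rate_bounds us uS al v Hv) as Hr. fold lm lp in Hr. assert (0 <= x * (lp - v * al)) by nra.
        replace ((b - lp) * b * al / k) with (- - ((b - lp) * b * al / k)) by ring.
        unfold k in *. nra.
      - intros v x y Hv Hx Hq.
        assert (Hq' : 0 <= ((b - lp) * b * be / k - b) * x + (- ((b - lp) * b * al / k)) * y + (b - lp) * (a * al) / k)
          by lra.
        unfold k in *. rewrite velocity_aff_split in Hq' by auto.
        pose proof (r_coord_rate a b al be v x y Hk) as E. rewrite E.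
        set (rv := b * be / (a * al + b * be) * x + - (b * al / (a * al + b * be)) * y + a * al / (a * al + b * be)) in *.
        apply Rmult_le_reg_r with (b - lp); [lra|].
        replace (b * lp / (b - lp) * x * (b - lp)) with (b * lp * x) by (field; lra).
        replace (b * (rv - x) * (b - lp)) with (b * ((b - lp) * rv - b * x) + b * lp * x) by ring.
        nra. }
    unfold velocity_aff, aff, k in *. lra.
  - (* if [lp >= b], then [velocity_aff lm > 0] forces [r > 0] and [velocity_aff lp <= - b x] *)
    assert (Hx : 0 < fst d) by (apply (proj1 HD); auto).
    rewrite velocity_aff_r_coord in Hmin |- * by auto.
    assert (0 < r_coord a b al be d) by nra. nra.
Qed.

Lemma region_greatest : b <> 0 -> forall d, D d -> region a b al be us uS d.
Proof.
  intros Hb d Hd. assert (Hx : 0 < fst d) by (apply (proj1 HD); auto).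
  apply region_of_velocity_aff; auto.
  destruct (Rlt_dec b 0) as [Hbn|Hbp].
  - left. split; auto. apply cs_props_velocity_aff_b_neg; auto.
  - right. split; [apply cs_props_velocity_aff_max_neg|apply cs_props_velocity_aff_min_pos]; auto; lra.
Qed.

End VelocityBounds.

Lemma velocity_aff_near a b al be lam e c : 0 < c -> exists eps, 0 < eps /\ forall q,
  Rabs (fst q - fst e) < eps -> Rabs (snd q - snd e) < eps ->
  Rabs (velocity_aff a b al be lam q - velocity_aff a b al be lam e) < c.
Proof. apply aff_near. Qed.

(* At [e] with [x = 1], [V = 1] one has [velocity_aff lam e = - lam], so [e] is an interior
   equilibrium; by continuity of the two affine functions so is a neighbourhood of [e]. *)
Lemma region_nonempty_interior a b al be us uS : us < 0 -> 0 < uS -> al <> 0 -> b <> 0 ->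
  a * al + b * be <> 0 -> nonempty_interior (region a b al be us uS).
Proof.
  intros Hus HuS Hal Hb Hk.
  pose proof (rate_min_neg_max_pos us uS al Hus HuS Hal) as Hl.
  set (lm := rate_min us uS al) in *. set (lp := rate_max us uS al) in *.
  set (e := point_of_x_v a b al be 1 1).
  assert (HFe : forall lam, velocity_aff a b al be lam e = - lam).
  { intro lam. unfold e. rewrite velocity_aff_eq, v_coord_point by (auto; simpl; lra).
    unfold v_velocity; simpl. ring. }
  destruct (velocity_aff_near a b al be lp e lp ltac:(lra)) as [e1 [He1 F1]].
  destruct (velocity_aff_near a b al be lm e (- lm) ltac:(lra)) as [e2 [He2 F2]].
  exists e, (Rmin (1 / 2) (Rmin e1 e2)).
  pose proof (Rmin_l (1 / 2) (Rmin e1 e2)). pose proof (Rmin_r (1 / 2) (Rmin e1 e2)).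
  pose proof (Rmin_l e1 e2). pose proof (Rmin_r e1 e2).
  split; [apply Rmin_pos; [lra|apply Rmin_pos; lra]|]. intros q Hq1 Hq2.
  specialize (F1 q ltac:(lra) ltac:(lra)). specialize (F2 q ltac:(lra) ltac:(lra)).
  rewrite HFe in F1, F2. apply Rabs_def2 in F1. apply Rabs_def2 in F2.
  assert (Hxq : 0 < fst q) by (apply Rabs_def2 in Hq1; unfold e, point_of_x_v in Hq1; simpl in Hq1; lra).
  apply region_int_sub. split; [auto|].
  rewrite !velocity_aff_eq in F1, F2 by (auto; lra).
  split; apply (Rmult_lt_reg_l (fst q)); auto; fold lp lm; nra.
Qed.

Lemma unique_control_set_generic a b al be us uS : us < 0 -> 0 < uS -> al <> 0 -> b <> 0 ->
  a * al + b * be <> 0 ->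
  exists C, control_set a b al be us uS C /\
    (forall D, control_set a b al be us uS D -> forall p, D p <-> C p) /\
    nonempty_interior C.
Proof.
  intros Hus HuS Hal Hb Hk.
  destruct (control_set_of_greatest a b al be us uS (region a b al be us uS)
              (region_cs_props a b al be us uS Hus HuS Hal Hb Hk)
              (fun D HD => region_greatest a b al be us uS D Hus HuS Hal Hk HD Hb)) as [H1 H2].
  exists (region a b al be us uS). split; [auto|split; [auto|]].
  apply region_nonempty_interior; auto.
Qed.

Lemma unique_control_set_degenerate a b al be us uS : ~ (a = 0 /\ b = 0) -> us < 0 -> 0 < uS ->
  al <> 0 -> a * al + b * be = 0 ->
  exists C, control_set a b al be us uS C /\
    (forall D, control_set a b al be us uS D -> forall p, D p <-> C p) /\
    ~ nonempty_interior C.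
Proof.
  intros hab Hus HuS Hal Hk.
  assert (Hb : b <> 0).
  { intros ->. apply hab. split; auto. apply Rmult_eq_reg_r with al; auto. lra. }
  destruct (control_set_of_greatest a b al be us uS (invariant_line a b al be)
              (invariant_line_cs_props a b al be us uS Hus HuS Hal Hb Hk)
              (fun D => invariant_line_greatest a b al be us uS D Hb Hk)) as [H1 H2].
  exists (invariant_line a b al be). split; [auto|split; [auto|]].
  apply invariant_line_empty_interior; auto.
Qed.

Lemma unique_control_set_nondegenerate a b al be us uS : us < 0 -> 0 < uS -> al <> 0 ->
  a * al + b * be <> 0 ->
  exists C, control_set a b al be us uS C /\
    (forall D, control_set a b al be us uS D -> forall p, D p <-> C p) /\
    nonempty_interior C.
Proof.
  intros Hus HuS Hal Hk. destruct (Req_dec b 0) as [->|Hb].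
  - apply unique_control_set_b0; auto. lra.
  - apply unique_control_set_generic; auto.
Qed.

Theorem theorem1 (a b al be us uS : R)
  (hab : ~ (a = 0 /\ b = 0)) (habe : ~ (al = 0 /\ be = 0))
  (hus : us < 0) (huS : 0 < uS) :
  (al = 0 ->
     exists Cs : nat -> (R * R -> Prop),
       (forall n, control_set a b al be us uS (Cs n)) /\
       (forall m n, m <> n -> exists p, ~ (Cs m p <-> Cs n p))) /\
  (al <> 0 ->
     exists C, control_set a b al be us uS C /\
       (forall D, control_set a b al be us uS D -> forall p, D p <-> C p) /\
       (nonempty_interior C <-> LARC a b al be us uS) /\
       (LARC a b al be us uS <-> al * (a * al + b * be) <> 0)).
Proof.
  split.
  - intros ->. apply infinitely_many_control_sets_al0; auto.
  - intros Hal. destruct (Req_dec (a * al + b * be) 0) as [Hk|Hk].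
    + pose proof (not_larc_of_degenerate a b al be us uS hab Hk) as HL.
      destruct (unique_control_set_degenerate a b al be us uS hab hus huS Hal Hk) as [C [H1 [H2 H3]]].
      exists C. split; [auto|split; [auto|split; [tauto|split; [tauto|]]]].
      intros H. exfalso. apply H. rewrite Hk. ring.
    + assert (Hk' : al * (a * al + b * be) <> 0) by (apply Rmult_integral_contrapositive; auto).
      pose proof (larc_of_nondegenerate a b al be us uS hus huS Hk') as HL.
      destruct (unique_control_set_nondegenerate a b al be us uS hus huS Hal Hk) as [C [H1 [H2 H3]]].
      exists C. split; [auto|split; [auto|split; split; auto]].
Qed.
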